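(* There exists an upwards-oriented translating soliton in $\mathbb{H}^2\times\mathbb{R}$ which is rotationally symmetric about a vertical axis and is an entire vertical graph over $\mathbb{H}^2$.
   Context: $\mathbb{H}^2\times\mathbb{R}$ carries the product metric $\langle\cdot,\cdot\rangle$ of the hyperbolic plane of curvature $-1$ and the real line; $\partial_z$ is the unit vertical vector field. An oriented immersed surface $M$ with unit normal $\eta$ and mean curvature $H_M$ (half the trace of the second fundamental form with respect to $\eta$) is a translating soliton if $H_M=\langle\eta,\partial_z\rangle$ at every point. Upwards-oriented means $\langle\eta,\partial_z\rangle>0$ on the graph. A vertical axis is a line $\{o\}\times\mathbb{R}$, $o\in\mathbb{H}^2$, and rotations about it are the isometries $(x,z)\mapsto(\rho(x),z)$ with $\rho$ a hyperbolic rotation fixing $o$. *)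

From Stdlib Require Import Reals List.
From Coquelicot Require Import Coquelicot.
Open Scope R_scope.

(* Model of H^2: the upper half-plane {(x,y) : y > 0} with metric
   (dx^2 + dy^2)/y^2 (curvature -1).  A point of H^2 x R is (x,y,z). *)
Definition in_H2 (x y : R) : Prop := 0 < y.

Definition partial_x (f : R -> R -> R) (x y : R) : R := Derive (fun t => f t y) x.
Definition partial_y (f : R -> R -> R) (x y : R) : R := Derive (fun t => f x t) y.

Fixpoint iter_partial (w : list bool) (f : R -> R -> R) : R -> R -> R :=
  match w with
  | nil => f
  | b :: w' => let g := iter_partial w' f in
               if b then partial_y g else partial_x g
  end.

Definition smooth_on_H2 (u : R -> R -> R) : Prop :=
  forall (w : list bool) (x y : R), in_H2 x y ->
    ex_derive (fun t => iter_partial w u t y) x /\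
    ex_derive (fun t => iter_partial w u x t) y /\
    continuous (fun p : R * R => iter_partial w u (fst p) (snd p)) (x, y).

(* For the entire graph  M = {(p, u p) : p in H^2}  with upward unit normal
   eta = (- grad u + d_z)/W, where grad u = y^2 (u_x, u_y) is the hyperbolic
   gradient and W = sqrt(1 + |grad u|^2) = sqrt(1 + y^2 (u_x^2 + u_y^2)). *)
Definition Wg (u : R -> R -> R) (x y : R) : R :=
  sqrt (1 + y ^ 2 * ((partial_x u x y) ^ 2 + (partial_y u x y) ^ 2)).

(* <eta, d_z> for the upward unit normal of the graph of u. *)
Definition graph_angle (u : R -> R -> R) (x y : R) : R := / Wg u x y.

(* Mean curvature (half the trace of the second fundamental form w.r.t. the
   upward normal) of the graph of u:  H = (1/2) div_{H^2} (grad u / W).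
   In half-plane coordinates, with sqrt(det g) = 1/y^2,
   div_{H^2}(grad u / W) = y^2 ( d_x (u_x / W) + d_y (u_y / W) ). *)
Definition graph_mean_curvature (u : R -> R -> R) (x y : R) : R :=
  / 2 * (y ^ 2 * (partial_x (fun a b => partial_x u a b / Wg u a b) x y
                 + partial_y (fun a b => partial_y u a b / Wg u a b) x y)).

Definition graph_is_translator (u : R -> R -> R) : Prop :=
  forall x y, in_H2 x y -> graph_mean_curvature u x y = graph_angle u x y.

Definition graph_upwards (u : R -> R -> R) : Prop :=
  forall x y, in_H2 x y -> 0 < graph_angle u x y.

(* Orientation-preserving isometries of the half-plane: the Mobius maps
   z |-> (a z + b)/(c z + d), a,b,c,d real, ad - bc = 1, written out in
   coordinates z = x + i y. *)
Definition mobius_x (a b c d x y : R) : R :=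
  ((a * x + b) * (c * x + d) + a * c * y ^ 2) / ((c * x + d) ^ 2 + (c * y) ^ 2).
Definition mobius_y (a b c d x y : R) : R :=
  y / ((c * x + d) ^ 2 + (c * y) ^ 2).

Definition is_rotation_about (ox oy a b c d : R) : Prop :=
  a * d - b * c = 1 /\ mobius_x a b c d ox oy = ox /\ mobius_y a b c d ox oy = oy.

Definition rotationally_symmetric_about (u : R -> R -> R) (ox oy : R) : Prop :=
  forall a b c d, is_rotation_about ox oy a b c d ->
    forall x y, in_H2 x y -> u (mobius_x a b c d x y) (mobius_y a b c d x y) = u x y.

From Stdlib Require Import Reals List Lra Lia.
From Coquelicot Require Import Coquelicot.
Open Scope R_scope.

(* Let [q = cosh d - 1], where [d] is the hyperbolic distance to the point [(0, 1)] of the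
   half-plane; rotations about [(0, 1)] preserve [q]. For [u = F (q)], the hyperbolic
   gradient and Laplacian of [q] are [|grad q|^2 = q (q + 2)] and [Delta q = 2 (q + 1)],
   so the graph of [u] is a translating soliton exactly when [P = F'] solves
     [q (q + 2) P' + (q + 1) P = (1 + q (q + 2) P^2) (2 - (q + 1) P)].
   This equation is singular at [q = 0]. There it has a power series solution with
   [P (0) = 1] whose coefficients grow at most like [4000^n / (n + 1)^2]. From a point
   inside the disk of convergence, the solution is continued to [[0, +oo)] by Picard
   iteration for a truncated, globally Lipschitz field; the barriers [0] and
   [2 / sqrt (q (q + 2))] show that the truncation is never active. All derivatives of
   [u] are explicit expressions in the derivatives of [F], whence smoothness. *)

(** * The radial equation *)

(* [sinh d ^ 2] when [z = cosh d - 1]. *)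
Definition sinh_sq (z : R) : R := z * (z + 2).

Definition radial_ode (z p dp : R) : Prop :=
  sinh_sq z * dp + (z + 1) * p = (1 + sinh_sq z * p ^ 2) * (2 - (z + 1) * p).

Definition radial_field (z p : R) : R :=
  ((1 + sinh_sq z * p ^ 2) * (2 - (z + 1) * p) - (z + 1) * p) / sinh_sq z.

Lemma sinh_sq_pos z : 0 < z -> 0 < sinh_sq z.
Proof. intros. unfold sinh_sq. nra. Qed.

Lemma radial_ode_field z p dp : 0 < z -> radial_ode z p dp <-> dp = radial_field z p.
Proof.
  intros Hz. pose proof (sinh_sq_pos z Hz). unfold radial_ode, radial_field.
  split; intros E; [apply (Rmult_eq_reg_l (sinh_sq z)); [|lra]|rewrite E]; field_simplify; lra.
Qed.

(** * Power series solution at the singular point *)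

Section CourseOfValues.

Variable step : (nat -> R) -> nat -> R.
Hypothesis step_ext : forall b b' n,
  (forall i, (i < n)%nat -> b i = b' i) -> step b n = step b' n.

(* [cov_table m] holds the first [m] values of the sequence and [0] beyond. *)
Fixpoint cov_table (m : nat) : nat -> R :=
  match m with
  | O => fun _ => 0
  | S k => fun i => if Nat.eqb i k then step (cov_table k) k else cov_table k i
  end.

Definition cov_rec (n : nat) : R := cov_table (S n) n.

Lemma cov_table_correct m i : (i < m)%nat -> cov_table m i = cov_rec i.
Proof.
  induction m as [|m IH]; intros Hi; [lia|].
  simpl. destruct (Nat.eqb i m) eqn:E.
  - apply Nat.eqb_eq in E; subst. unfold cov_rec. simpl. now rewrite Nat.eqb_refl.
  - apply Nat.eqb_neq in E. apply IH. lia.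
Qed.

Lemma cov_rec_eq n : cov_rec n = step cov_rec n.
Proof.
  unfold cov_rec at 1. simpl. rewrite Nat.eqb_refl.
  apply step_ext. intros i Hi. now apply cov_table_correct.
Qed.

End CourseOfValues.

Lemma PS_mult_ext_upto a b a' b' n :
  (forall i, (i <= n)%nat -> a i = a' i) -> (forall i, (i <= n)%nat -> b i = b' i) ->
  PS_mult a b n = PS_mult a' b' n.
Proof. intros Ha Hb. apply sum_eq. intros i Hi. rewrite Ha, Hb; auto; lia. Qed.

Lemma PS_incr_n_ext_below (s s' : nat -> R) k n : (0 < k)%nat ->
  (forall i, (i < n)%nat -> s i = s' i) -> PS_incr_n s k n = PS_incr_n s' k n.
Proof.
  intros Hk H. rewrite !PS_incr_n_simplify.
  destruct (Compare_dec.le_lt_dec k n); auto. apply H. lia.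
Qed.

Lemma sum_f_R0_rev f n : sum_f_R0 f n = sum_f_R0 (fun i => f (n - i)%nat) n.
Proof.
  revert f. induction n as [|n IH]; intros f; [reflexivity|].
  rewrite tech5, (decomp_sum (fun i => f (S n - i)%nat) (S n)) by lia.
  simpl pred. rewrite Nat.sub_0_r, IH. simpl. lra.
Qed.

Lemma sum_f_R0_scal c f n : sum_f_R0 (fun i => c * f i) n = c * sum_f_R0 f n.
Proof. induction n as [|n IH]; simpl; [|rewrite IH]; ring. Qed.

Lemma sum_inv_sq_le n : sum_f_R0 (fun i => / INR (S i) ^ 2) n <= 2 - / INR (S n).
Proof.
  induction n as [|n IH]; [simpl; lra|].
  rewrite tech5. pose proof (pos_INR n). rewrite !S_INR in *.
  assert (/ (INR n + 1 + 1) ^ 2 + / (INR n + 1 + 1) <= / (INR n + 1)); [|lra].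
  apply Rle_trans with (/ ((INR n + 1) * (INR n + 1 + 1)) + / (INR n + 1 + 1)).
  - apply Rplus_le_compat_r, Rinv_le_contravar; nra.
  - right. field. lra.
Qed.

(* Makes the weights [K^n / (n+1)^2] below submultiplicative under convolution, up to 8. *)
Lemma sum_inv_sq_conv_le m :
  sum_f_R0 (fun i => / INR (S i) ^ 2 * / INR (S (m - i)) ^ 2) m <= 8 / INR (S (S m)) ^ 2.
Proof.
  apply Rle_trans with
    (sum_f_R0 (fun i => 2 / INR (S (S m)) ^ 2 * (/ INR (S i) ^ 2 + / INR (S (m - i)) ^ 2)) m).
  - apply sum_Rle. intros i Hi.
    assert (Hab : INR (S i) + INR (S (m - i)) = INR (S (S m))).
    { rewrite <- plus_INR. f_equal. lia. }
    rewrite <- Hab.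
    assert (0 < INR (S i)) by (apply lt_0_INR; lia).
    assert (0 < INR (S (m - i))) by (apply lt_0_INR; lia).
    set (a := INR (S i)) in *. set (b := INR (S (m - i))) in *.
    assert (E : 2 / (a + b) ^ 2 * (/ a ^ 2 + / b ^ 2) - / a ^ 2 * / b ^ 2
              = (a - b) ^ 2 / ((a + b) ^ 2 * a ^ 2 * b ^ 2)) by (field; lra).
    assert (0 <= (a - b) ^ 2 / ((a + b) ^ 2 * a ^ 2 * b ^ 2)).
    { apply Rmult_le_pos; [apply pow2_ge_0|]. apply Rlt_le, Rinv_0_lt_compat.
      apply Rmult_lt_0_compat; [apply Rmult_lt_0_compat|]; apply pow_lt; lra. }
    lra.
  - rewrite sum_f_R0_scal, sum_plus, (sum_f_R0_rev (fun i => / INR (S (m - i)) ^ 2) m).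
    rewrite (sum_eq (fun i => / INR (S (m - (m - i))) ^ 2) (fun i => / INR (S i) ^ 2))
      by (intros i Hi; do 3 f_equal; lia).
    pose proof (sum_inv_sq_le m).
    assert (0 < / INR (S m)) by (apply Rinv_0_lt_compat, lt_0_INR; lia).
    assert (0 < / INR (S (S m)) ^ 2) by (apply Rinv_0_lt_compat, pow_lt, lt_0_INR; lia).
    unfold Rdiv. nra.
Qed.

Section Weight.

Variable K : R.
Hypothesis K_ge1 : 1 <= K.

Definition weight (m : nat) : R := K ^ m / INR (S m) ^ 2.

Lemma weight_pos m : 0 < weight m.
Proof.
  apply Rdiv_lt_0_compat; apply pow_lt; [lra|]. apply lt_0_INR. lia.
Qed.

Lemma PS_mult_weight_le b c al be m : 0 <= al -> 0 <= be ->
  (forall i, (i <= m)%nat -> Rabs (b i) <= al * weight i) ->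
  (forall i, (i <= m)%nat -> Rabs (c i) <= be * weight i) ->
  Rabs (PS_mult b c m) <= 8 * al * be * weight m.
Proof.
  intros Hal Hbe Hb Hc. unfold PS_mult.
  eapply Rle_trans; [apply Rsum_abs|].
  apply Rle_trans with
    (sum_f_R0 (fun i => al * be * K ^ m * (/ INR (S i) ^ 2 * / INR (S (m - i)) ^ 2)) m).
  - apply sum_Rle. intros i Hi. rewrite Rabs_mult.
    replace (al * be * K ^ m * (/ INR (S i) ^ 2 * / INR (S (m - i)) ^ 2))
      with ((al * weight i) * (be * weight (m - i))).
    + apply Rmult_le_compat; try apply Rabs_pos; [apply Hb | apply Hc]; lia.
    + unfold weight. replace m with (i + (m - i))%nat at 3 by lia.
      rewrite pow_add. unfold Rdiv. ring.
  - rewrite sum_f_R0_scal. pose proof (sum_inv_sq_conv_le m).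
    assert (0 <= al * be * K ^ m) by (apply Rmult_le_pos; [nra | apply pow_le; lra]).
    apply Rle_trans with (al * be * K ^ m * (8 / INR (S (S m)) ^ 2));
      [now apply Rmult_le_compat_l|].
    unfold weight, Rdiv.
    replace (8 * al * be * (K ^ m * / INR (S m) ^ 2))
      with (al * be * K ^ m * (8 * / INR (S m) ^ 2)) by ring.
    apply Rmult_le_compat_l, Rmult_le_compat_l; [assumption | lra |].
    apply Rinv_le_contravar; [apply pow_lt, lt_0_INR; lia|].
    apply pow_incr. split; [apply pos_INR | apply le_INR; lia].
Qed.

Lemma weight_le_shift m N : (m <= N <= m + 2)%nat -> weight m <= 9 * weight N.
Proof.
  intros HmN. unfold weight, Rdiv.
  assert (HK : K ^ m <= K ^ N) by (apply Rle_pow; lia || lra).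
  assert (Hm : 0 < INR (S m)) by (apply lt_0_INR; lia).
  assert (HN : INR (S N) <= 3 * INR (S m)).
  { replace 3 with (INR 3) by (simpl; lra). rewrite <- mult_INR. apply le_INR. lia. }
  assert (INR (S m) <= INR (S N)) by (apply le_INR; lia).
  assert (0 < K ^ m) by (apply pow_lt; lra).
  assert (HI : / INR (S m) ^ 2 <= 9 * / INR (S N) ^ 2).
  { apply Rmult_le_reg_r with (INR (S m) ^ 2 * INR (S N) ^ 2);
      [apply Rmult_lt_0_compat; apply pow_lt; lra|].
    replace (/ INR (S m) ^ 2 * (INR (S m) ^ 2 * INR (S N) ^ 2)) with (INR (S N) ^ 2)
      by (field; lra).
    replace (9 * / INR (S N) ^ 2 * (INR (S m) ^ 2 * INR (S N) ^ 2)) with (9 * INR (S m) ^ 2)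
      by (field; lra).
    nra. }
  replace (9 * (K ^ N * / INR (S N) ^ 2)) with (K ^ N * (9 * / INR (S N) ^ 2)) by ring.
  apply Rmult_le_compat; try lra. left. apply Rinv_0_lt_compat. nra.
Qed.

Lemma PS_incr_n_weight_le s c k N : 0 <= c -> (1 <= k <= 3)%nat ->
  (forall m, (m <= N)%nat -> Rabs (s m) <= c * weight m) ->
  Rabs (PS_incr_n s k (S N)) <= 9 * c * weight N.
Proof.
  intros Hc Hk Hs. rewrite PS_incr_n_simplify.
  destruct (Compare_dec.le_lt_dec k (S N)) as [Hle|Hlt].
  - eapply Rle_trans; [apply Hs; lia|].
    replace (9 * c * weight N) with (c * (9 * weight N)) by ring.
    apply Rmult_le_compat_l; [lra|]. apply weight_le_shift. lia.
  - unfold zero; simpl. rewrite Rabs_R0. pose proof (weight_pos N). nra.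
Qed.

Lemma CV_radius_ge_of_weight b c : 0 <= c -> (forall n, Rabs (b n) <= c * weight n) ->
  Rbar_le (/ K) (CV_radius b).
Proof.
  intros Hc Hb. apply (proj1 (CV_radius_bounded b)). exists c. intros n.
  rewrite Rabs_mult, <- RPow_abs, (Rabs_right (/ K))
    by (apply Rle_ge, Rlt_le, Rinv_0_lt_compat; lra).
  assert (HKn : 0 < K ^ n) by (apply pow_lt; lra).
  assert (H1 : 1 <= INR (S n) ^ 2).
  { rewrite <- (pow1 2). apply pow_incr. split; [lra|]. apply (le_INR 1). lia. }
  apply Rle_trans with (c * weight n * (/ K) ^ n).
  - apply Rmult_le_compat_r; [|apply Hb]. apply pow_le. apply Rlt_le. apply Rinv_0_lt_compat. lra.
  - unfold weight. rewrite pow_inv.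
    assert (0 < INR (S n)) by (apply lt_0_INR; lia).
    replace (c * (K ^ n / INR (S n) ^ 2) * / K ^ n) with (c * / INR (S n) ^ 2)
      by (field; split; apply Rgt_not_eq; lra).
    rewrite <- (Rmult_1_r c) at 2. apply Rmult_le_compat_l; [lra|].
    rewrite <- Rinv_1. apply Rinv_le_contravar; lra.
Qed.

End Weight.

(* Coefficient of [z^n] in [sinh_sq z * P' + 2 (z + 1) P - 2 - 2 sinh_sq z P^2
   + (z + 1) sinh_sq z P^3], solved for [a_n]. *)
Definition series_coef_step (b : nat -> R) (n : nat) : R :=
  let b2 := PS_mult b b in
  let b3 := PS_mult b b2 in
  (match n with O => 2 | S _ => 0 end - INR (S n) * PS_incr_n b 1 n
   + 4 * PS_incr_n b2 1 n + 2 * PS_incr_n b2 2 n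
   - 2 * PS_incr_n b3 1 n - 3 * PS_incr_n b3 2 n - PS_incr_n b3 3 n) / (2 * INR n + 2).

Lemma series_coef_step_ext b b' n :
  (forall i, (i < n)%nat -> b i = b' i) -> series_coef_step b n = series_coef_step b' n.
Proof.
  intros H. unfold series_coef_step.
  assert (H2 : forall m, (m < n)%nat -> PS_mult b b m = PS_mult b' b' m)
    by (intros; apply PS_mult_ext_upto; intros; apply H; lia).
  assert (H3 : forall m, (m < n)%nat -> PS_mult b (PS_mult b b) m = PS_mult b' (PS_mult b' b') m)
    by (intros; apply PS_mult_ext_upto; intros; [apply H | apply H2]; lia).
  set (c2 := PS_mult b b) in *. set (c3 := PS_mult b c2) in *.
  rewrite (PS_incr_n_ext_below b b' 1 n), (PS_incr_n_ext_below c2 _ 1 n),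
    (PS_incr_n_ext_below c2 _ 2 n), (PS_incr_n_ext_below c3 _ 1 n),
    (PS_incr_n_ext_below c3 _ 2 n), (PS_incr_n_ext_below c3 _ 3 n) by (lia || eauto).
  reflexivity.
Qed.

Definition series_coef : nat -> R := cov_rec series_coef_step.

Lemma series_coef_eq n : series_coef n = series_coef_step series_coef n.
Proof. apply cov_rec_eq, series_coef_step_ext. Qed.

Lemma series_coef_0 : series_coef 0 = 1.
Proof.
  rewrite series_coef_eq. unfold series_coef_step, PS_incr_n, PS_incr_1, zero. simpl. field.
Qed.

Lemma series_coef_growth_ineq x : 0 <= x ->
  (9 * x + 3906) / (x + 1) ^ 2 / (2 * x + 4) <= 4000 / (x + 2) ^ 2.
Proof.
  intros Hx. apply Rmult_le_reg_r with ((x + 1) ^ 2 * (2 * x + 4) * (x + 2) ^ 2).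
  { apply Rmult_lt_0_compat; [apply Rmult_lt_0_compat|]; nra. }
  replace ((9 * x + 3906) / (x + 1) ^ 2 / (2 * x + 4) * ((x + 1) ^ 2 * (2 * x + 4) * (x + 2) ^ 2))
    with ((9 * x + 3906) * (x + 2) ^ 2) by (field; lra).
  replace (4000 / (x + 2) ^ 2 * ((x + 1) ^ 2 * (2 * x + 4) * (x + 2) ^ 2))
    with (8000 * (x + 1) ^ 2 * (x + 2)) by (field; lra).
  nra.
Qed.

Lemma series_coef_step_bound b N :
  (forall m, (m <= N)%nat -> Rabs (b m) <= weight 4000 m) ->
  Rabs (series_coef_step b (S N)) <= weight 4000 (S N).
Proof.
  intros Hb.
  assert (HK : 1 <= 4000) by lra.
  assert (Hb1 : forall m, (m <= N)%nat -> Rabs (b m) <= 1 * weight 4000 m)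
    by (intros; rewrite Rmult_1_l; auto).
  assert (Hb2 : forall m, (m <= N)%nat -> Rabs (PS_mult b b m) <= 8 * weight 4000 m).
  { intros m Hm. replace 8 with (8 * 1 * 1) by ring.
    apply PS_mult_weight_le; intros; try lra; apply Hb1; lia. }
  assert (Hb3 : forall m, (m <= N)%nat -> Rabs (PS_mult b (PS_mult b b) m) <= 64 * weight 4000 m).
  { intros m Hm. replace 64 with (8 * 1 * 8) by ring.
    apply PS_mult_weight_le; intros; try lra; [apply Hb1 | apply Hb2]; lia. }
  pose proof (PS_incr_n_weight_le _ HK b 1 1 N ltac:(lra) ltac:(lia) Hb1) as T1.
  pose proof (PS_incr_n_weight_le _ HK _ 8 1 N ltac:(lra) ltac:(lia) Hb2) as T21.
  pose proof (PS_incr_n_weight_le _ HK _ 8 2 N ltac:(lra) ltac:(lia) Hb2) as T22.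
  pose proof (PS_incr_n_weight_le _ HK _ 64 1 N ltac:(lra) ltac:(lia) Hb3) as T31.
  pose proof (PS_incr_n_weight_le _ HK _ 64 2 N ltac:(lra) ltac:(lia) Hb3) as T32.
  pose proof (PS_incr_n_weight_le _ HK _ 64 3 N ltac:(lra) ltac:(lia) Hb3) as T33.
  apply Rabs_le_between in T1, T21, T22, T31, T32, T33.
  pose proof (weight_pos _ HK N) as Hw. pose proof (pos_INR N) as HN.
  unfold series_coef_step. rewrite !S_INR in *.
  rewrite Rabs_div, (Rabs_right (2 * (INR N + 1) + 2)) by lra.
  (* [3906 = 9 (2 + 4 * 8 + 2 * 8 + 2 * 64 + 3 * 64 + 64)], collecting all the terms. *)
  apply Rle_trans with ((9 * INR N + 3906) * weight 4000 N / (2 * INR N + 4)).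
  - unfold Rdiv. replace (2 * (INR N + 1) + 2) with (2 * INR N + 4) by ring.
    apply Rmult_le_compat_r; [apply Rlt_le, Rinv_0_lt_compat; lra|].
    apply Rabs_le. split; nra.
  - assert (E1 : weight 4000 (S N) = 4000 ^ N * (4000 / (INR N + 2) ^ 2)).
    { unfold weight. rewrite !S_INR. simpl. field. lra. }
    assert (E0 : weight 4000 N = 4000 ^ N / (INR N + 1) ^ 2)
      by (unfold weight; now rewrite S_INR).
    rewrite E1, E0.
    replace ((9 * INR N + 3906) * (4000 ^ N / (INR N + 1) ^ 2) / (2 * INR N + 4))
      with (4000 ^ N * ((9 * INR N + 3906) / (INR N + 1) ^ 2 / (2 * INR N + 4))) by (field; lra).
    apply Rmult_le_compat_l; [apply pow_le; lra|]. now apply series_coef_growth_ineq.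
Qed.

Lemma series_coef_bound n : Rabs (series_coef n) <= weight 4000 n.
Proof.
  induction n as [[|N] IH] using (well_founded_induction Wf_nat.lt_wf).
  - rewrite series_coef_0. unfold weight. simpl. rewrite Rabs_R1. lra.
  - rewrite series_coef_eq. apply series_coef_step_bound. intros m Hm. apply IH. lia.
Qed.

Lemma is_pseries_Rplus (a b : nat -> R) x la lb :
  is_pseries a x la -> is_pseries b x lb -> is_pseries (fun n => a n + b n) x (la + lb).
Proof. apply (is_pseries_plus a b x la lb). Qed.

Lemma is_pseries_Rscal c (a : nat -> R) x l :
  is_pseries a x l -> is_pseries (fun n => c * a n) x (c * l).
Proof. apply (is_pseries_scal c a x l), Rmult_comm. Qed.

Lemma is_pseries_shift (a : nat -> R) k x l :
  is_pseries a x l -> is_pseries (PS_incr_n a k) x (x ^ k * l).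
Proof. intros H. rewrite <- pow_n_pow. exact (is_pseries_incr_n a k x l H). Qed.

Lemma is_pseries_const c x : is_pseries (fun n => match n with O => c | S _ => 0 end) x c.
Proof.
  apply is_pseries_R. apply filterlim_ext with (fun _ => c); [|apply filterlim_const].
  intros N. rewrite sum_n_Reals. symmetry.
  induction N as [|N IH]; [simpl; apply Rmult_1_r|].
  rewrite tech5, IH. simpl. ring.
Qed.

Lemma PS_incr_n_derive_2 a n : PS_incr_n (PS_derive a) 2 (S n) = INR n * a n :> R.
Proof. destruct n; [simpl; unfold zero; simpl; ring | reflexivity]. Qed.

Definition radial_residual_coef (a : nat -> R) (n : nat) : R :=
  let a2 := PS_mult a a in
  let a3 := PS_mult a a2 in
  2 * PS_incr_n (PS_derive a) 1 n + PS_incr_n (PS_derive a) 2 n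
  + 2 * PS_incr_n a 1 n + 2 * a n - match n with O => 2 | S _ => 0 end
  - 4 * PS_incr_n a2 1 n - 2 * PS_incr_n a2 2 n
  + 2 * PS_incr_n a3 1 n + 3 * PS_incr_n a3 2 n + PS_incr_n a3 3 n.

Lemma is_pseries_radial_residual a z :
  Rbar_lt (Rabs z) (CV_radius a) -> Rbar_lt (Rabs z) (CV_radius (PS_mult a a)) ->
  is_pseries (radial_residual_coef a) z
    (sinh_sq z * Derive (PSeries a) z + (z + 1) * PSeries a z
     - (1 + sinh_sq z * PSeries a z ^ 2) * (2 - (z + 1) * PSeries a z)).
Proof.
  intros Ha Ha2.
  set (p := PSeries a z). set (dp := Derive (PSeries a) z).
  assert (P1 : is_pseries a z p) by now apply PSeries_correct, CV_radius_inside.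
  assert (D1 : is_pseries (PS_derive a) z dp) by now apply is_pseries_derive.
  assert (P2 : is_pseries (PS_mult a a) z (p * p)) by now apply is_pseries_mult.
  assert (P3 : is_pseries (PS_mult a (PS_mult a a)) z (p * (p * p)))
    by now apply is_pseries_mult.
  pose proof (is_pseries_Rplus _ _ _ _ _
    (is_pseries_Rplus _ _ _ _ _
      (is_pseries_Rplus _ _ _ _ _
        (is_pseries_Rscal 2 _ _ _ (is_pseries_shift _ 1 _ _ D1))
        (is_pseries_shift _ 2 _ _ D1))
      (is_pseries_Rplus _ _ _ _ _
        (is_pseries_Rscal 2 _ _ _ (is_pseries_shift _ 1 _ _ P1))
        (is_pseries_Rplus _ _ _ _ _ (is_pseries_Rscal 2 _ _ _ P1) (is_pseries_const (-2) z))))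
    (is_pseries_Rplus _ _ _ _ _
      (is_pseries_Rplus _ _ _ _ _
        (is_pseries_Rscal (-4) _ _ _ (is_pseries_shift _ 1 _ _ P2))
        (is_pseries_Rscal (-2) _ _ _ (is_pseries_shift _ 2 _ _ P2)))
      (is_pseries_Rplus _ _ _ _ _
        (is_pseries_Rplus _ _ _ _ _
          (is_pseries_Rscal 2 _ _ _ (is_pseries_shift _ 1 _ _ P3))
          (is_pseries_Rscal 3 _ _ _ (is_pseries_shift _ 2 _ _ P3)))
        (is_pseries_shift _ 3 _ _ P3)))) as T.
  eapply is_pseries_ext in T.
  - match type of T with is_pseries _ _ ?v => replace (_ - _) with v; [exact T|] end.
    unfold sinh_sq. simpl. ring.
  - intros n. unfold radial_residual_coef. destruct n; simpl; ring.
Qed.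

Lemma series_coef_residual n : radial_residual_coef series_coef n = 0.
Proof.
  unfold radial_residual_coef. destruct n as [|m].
  - rewrite series_coef_0. unfold PS_incr_n, PS_incr_1, zero. simpl. ring.
  - rewrite PS_incr_n_derive_2.
    change (PS_incr_n (PS_derive series_coef) 1 (S m)) with (INR (S m) * series_coef (S m)).
    pose proof (series_coef_eq (S m)) as E. unfold series_coef_step in E.
    cbv beta iota zeta in E |- *.
    change (PS_incr_n series_coef 1 (S m)) with (series_coef m) in *.
    pose proof (pos_INR m). rewrite !S_INR in *. rewrite E. field. lra.
Qed.

Definition rho : R := / 4000.

Lemma rho_pos : 0 < rho.
Proof. unfold rho. apply Rinv_0_lt_compat. lra. Qed.

Lemma series_coef_sq_bound n : Rabs (PS_mult series_coef series_coef n) <= 8 * weight 4000 n.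
Proof.
  replace 8 with (8 * 1 * 1) by ring.
  apply PS_mult_weight_le; intros; try lra; rewrite Rmult_1_l; apply series_coef_bound.
Qed.

Lemma Rabs_lt_CV_radius b c z : 0 <= c -> (forall n, Rabs (b n) <= c * weight 4000 n) ->
  Rabs z < rho -> Rbar_lt (Rabs z) (CV_radius b).
Proof.
  intros Hc Hb Hz. pose proof (CV_radius_ge_of_weight 4000 ltac:(lra) b c Hc Hb).
  destruct (CV_radius b); simpl in *; unfold rho in Hz; lra || auto.
Qed.

Lemma CV_radius_series_coef z : Rabs z < rho -> Rbar_lt (Rabs z) (CV_radius series_coef).
Proof.
  apply (Rabs_lt_CV_radius _ 1); [lra|]. intros n. rewrite Rmult_1_l. apply series_coef_bound.
Qed.

Definition series_sol : R -> R := PSeries series_coef.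

Lemma series_sol_ode z : Rabs z < rho -> radial_ode z (series_sol z) (Derive series_sol z).
Proof.
  intros Hz.
  assert (T : is_pseries (radial_residual_coef series_coef) z 0).
  { apply (is_pseries_ext (fun n => match n with O => 0 | S _ => 0 end)).
    - intros [|n]; symmetry; apply series_coef_residual.
    - apply is_pseries_const. }
  pose proof (is_pseries_radial_residual series_coef z (CV_radius_series_coef z Hz)
    (Rabs_lt_CV_radius _ 8 z ltac:(lra) series_coef_sq_bound Hz)) as R.
  apply is_pseries_unique in T, R. rewrite T in R.
  unfold radial_ode, series_sol. lra.
Qed.

Lemma series_term_bound z k : Rabs z <= rho / 2 ->
  Rabs (series_coef (S k) * z ^ S k) <= / 8 * (/ 2) ^ k.
Proof.
  intros Hz. pose proof rho_pos. rewrite Rabs_mult, <- RPow_abs.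
  apply Rle_trans with (weight 4000 (S k) * (rho / 2) ^ S k).
  - apply Rmult_le_compat; [apply Rabs_pos | apply pow_le, Rabs_pos | apply series_coef_bound |].
    apply pow_incr. split; [apply Rabs_pos | assumption].
  - unfold weight, rho. rewrite !S_INR. pose proof (pos_INR k).
    assert (E : (/ 4000 / 2) ^ S k = / 4000 ^ S k * (/ 2) ^ S k)
      by (unfold Rdiv; now rewrite Rpow_mult_distr, pow_inv).
    assert (4000 ^ S k <> 0) by (apply pow_nonzero; lra).
    replace (4000 ^ S k / (INR k + 1 + 1) ^ 2 * (/ 4000 / 2) ^ S k)
      with (/ 2 * (/ 2) ^ k / (INR k + 1 + 1) ^ 2)
      by (rewrite E; simpl ((/ 2) ^ S k); field; split; lra).
    assert (0 < (/ 2) ^ k) by (apply pow_lt; lra).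
    apply Rle_trans with (/ 2 * (/ 2) ^ k / 4); [|lra].
    unfold Rdiv. apply Rmult_le_compat_l; [nra|]. apply Rinv_le_contravar; nra.
Qed.

Lemma series_sol_bound z : Rabs z <= rho / 2 -> Rabs (series_sol z - 1) <= 1 / 4.
Proof.
  intros Hz. pose proof (series_term_bound z) as HT.
  assert (Hgeo : is_series (fun k => / 8 * (/ 2) ^ k) (/ 4)).
  { replace (/ 4) with (/ 8 * / (1 - / 2)) by field.
    apply (is_series_scal_l (/ 8) (fun k => (/ 2) ^ k)), is_series_geom.
    rewrite Rabs_right; lra. }
  assert (Htail : ex_series (fun k => Rabs (series_coef (S k) * z ^ S k))).
  { apply (@ex_series_le R_AbsRing R_CompleteNormedModule) with (fun k => / 8 * (/ 2) ^ k).
    - intros n. unfold norm; simpl. rewrite Rabs_Rabsolu. now apply HT.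
    - eexists. exact Hgeo. }
  assert (Hex : ex_series (fun k => series_coef k * z ^ k)).
  { apply ex_series_incr_1, ex_series_Rabs, Htail. }
  unfold series_sol. rewrite PSeries_eq.
  rewrite (Series_ext _ (fun k => series_coef k * z ^ k))
    by (intros; rewrite pow_n_pow; apply Rmult_comm).
  rewrite Series_incr_1, series_coef_0, pow_O by exact Hex.
  replace (1 * 1 + Series (fun k => series_coef (S k) * z ^ S k) - 1)
    with (Series (fun k => series_coef (S k) * z ^ S k)) by ring.
  eapply Rle_trans; [now apply Series_Rabs|].
  replace (1 / 4) with (/ 4) by field. rewrite <- (is_series_unique _ _ Hgeo).
  apply Series_le; [intros n; split; [apply Rabs_pos | now apply HT] | eexists; exact Hgeo].
Qed.

(** * Real analysis *)

Section RealContinuity.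

Context {U : UniformSpace}.

Lemma continuous_Rplus (f g : U -> R) x :
  continuous f x -> continuous g x -> continuous (fun t => f t + g t) x.
Proof. apply (continuous_plus f g). Qed.

Lemma continuous_Rmult (f g : U -> R) x :
  continuous f x -> continuous g x -> continuous (fun t => f t * g t) x.
Proof. apply (continuous_mult f g). Qed.

Lemma continuous_Rminus (f g : U -> R) x :
  continuous f x -> continuous g x -> continuous (fun t => f t - g t) x.
Proof. intros. apply continuous_Rplus; [|apply (continuous_opp g)]; assumption. Qed.

Lemma continuous_Rinv_fun (f : U -> R) x :
  continuous f x -> f x <> 0 -> continuous (fun t => / f t) x.
Proof. intros. apply (continuous_comp f Rinv); [|apply continuous_Rinv]; assumption. Qed.

Lemma continuous_Rdiv (f g : U -> R) x :
  continuous f x -> continuous g x -> g x <> 0 -> continuous (fun t => f t / g t) x.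
Proof. intros. apply continuous_Rmult; [|apply continuous_Rinv_fun]; assumption. Qed.

Lemma continuous_pow_fun (f : U -> R) n x :
  continuous f x -> continuous (fun t => f t ^ n) x.
Proof.
  intros Hf. induction n as [|n IH]; [apply continuous_const|].
  apply continuous_Rmult; assumption.
Qed.

Lemma continuous_sqrt_fun (f : U -> R) x :
  continuous f x -> continuous (fun t => sqrt (f t)) x.
Proof. intros. apply (continuous_comp f sqrt); [|apply continuous_sqrt]; assumption. Qed.

Lemma continuous_Rmax (f g : U -> R) x :
  continuous f x -> continuous g x -> continuous (fun t => Rmax (f t) (g t)) x.
Proof.
  intros Hf Hg.
  apply continuous_ext with (fun t => (f t + g t + Rabs (f t - g t)) / 2).
  - intros t. unfold Rmax. destruct Rle_dec;
      [rewrite Rabs_left1 | rewrite Rabs_right]; lra.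
  - apply continuous_Rdiv; [|apply continuous_const | lra].
    apply continuous_Rplus; [now apply continuous_Rplus|].
    apply (continuous_comp _ Rabs), continuous_Rabs. now apply continuous_Rminus.
Qed.

Lemma continuous_Rmin (f g : U -> R) x :
  continuous f x -> continuous g x -> continuous (fun t => Rmin (f t) (g t)) x.
Proof.
  intros Hf Hg.
  apply continuous_ext with (fun t => - Rmax (- f t) (- g t)).
  - intros t. unfold Rmin, Rmax. repeat destruct Rle_dec; lra.
  - apply (continuous_opp (fun t => Rmax (- f t) (- g t))).
    apply continuous_Rmax; [apply (continuous_opp f) | apply (continuous_opp g)]; assumption.
Qed.

End RealContinuity.

Lemma Rabs_sub_le_of_derive_bound (f df : R -> R) M :
  (forall x, is_derive f x (df x)) -> (forall x, Rabs (df x) <= M) ->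
  forall s t, Rabs (f s - f t) <= M * Rabs (s - t).
Proof.
  intros Hd Hb s t.
  destruct (MVT_gen f t s df) as [c [_ E]].
  - intros; apply Hd.
  - intros. apply continuity_pt_filterlim, (ex_derive_continuous f). eexists. apply Hd.
  - rewrite E, Rabs_mult. apply Rmult_le_compat_r; [apply Rabs_pos | apply Hb].
Qed.

Lemma eq_0_of_le_geom a M : (forall n, Rabs a <= M * (/ 2) ^ n) -> a = 0.
Proof.
  intros H.
  assert (Hl : is_lim_seq (fun n => M * (/ 2) ^ n) 0).
  { replace (Finite 0) with (Rbar_mult M 0) by (simpl; f_equal; ring).
    apply is_lim_seq_scal_l, is_lim_seq_geom. rewrite Rabs_right; lra. }
  assert (Hle : Rbar_le (Rabs a) 0).
  { apply (is_lim_seq_le (fun _ => Rabs a) (fun n => M * (/ 2) ^ n)); auto.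
    apply is_lim_seq_const. }
  simpl in Hle. destruct (Req_dec a 0) as [|Ha]; auto.
  pose proof (Rabs_pos_lt a Ha). lra.
Qed.

Lemma ex_RInt_continuous_R (f : R -> R) a b :
  (forall z, Rmin a b <= z <= Rmax a b -> continuous f z) -> ex_RInt f a b.
Proof. apply (ex_RInt_continuous (V := R_CompleteNormedModule)). Qed.

Lemma abs_RInt_le_RInt (f g : R -> R) a b : a <= b ->
  (forall x, a <= x <= b -> continuous f x) -> (forall x, a <= x <= b -> continuous g x) ->
  (forall x, a <= x <= b -> Rabs (f x) <= g x) -> Rabs (RInt f a b) <= RInt g a b.
Proof.
  intros Hab Hf Hg H.
  assert (Ef : ex_RInt f a b)
    by (apply ex_RInt_continuous_R; rewrite Rmin_left, Rmax_right by lra; auto).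
  assert (Eg : ex_RInt g a b)
    by (apply ex_RInt_continuous_R; rewrite Rmin_left, Rmax_right by lra; auto).
  eapply Rle_trans; [now apply abs_RInt_le|].
  apply RInt_le; auto.
  - apply ex_RInt_continuous_R. rewrite Rmin_left, Rmax_right by lra. intros.
    apply (continuous_comp f Rabs); [auto | apply continuous_Rabs].
  - intros x Hx. apply H. lra.
Qed.

Lemma is_derive_const_plus_RInt (g : R -> R) c a z : (forall x, continuous g x) ->
  is_derive (fun b => c + RInt g a b) z (g z).
Proof.
  intros Hg.
  assert (H : is_derive (RInt g a) z (g z)).
  { apply (is_derive_RInt (V := R_NormedModule) g _ a z); [|auto].
    apply filter_forall. intros b. apply (RInt_correct (V := R_CompleteNormedModule)).
    apply ex_RInt_continuous_R. auto. }
  replace (g z) with (plus 0 (g z)) by (unfold plus; simpl; ring).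
  apply (is_derive_plus (fun _ => c) (RInt g a)); [|exact H].
  apply (is_derive_const (K := R_AbsRing) (V := R_NormedModule)).
Qed.

Lemma MVT_strict (f df : R -> R) a b : a < b ->
  (forall x, a < x < b -> is_derive f x (df x)) -> (forall x, a <= x <= b -> continuous f x) ->
  exists c, a < c < b /\ f b - f a = df c * (b - a).
Proof.
  intros Hab Hd Hc.
  set (pr := fun c (Hc : a < c < b) =>
    exist (derivable_pt_abs f c) (df c) (proj1 (is_derive_Reals f c (df c)) (Hd c Hc))).
  destruct (MVT f id a b pr (fun c _ => derivable_pt_id c) Hab) as [c [Pc E]].
  - intros. now apply continuity_pt_filterlim, Hc.
  - intros. apply derivable_continuous_pt, derivable_pt_id.
  - exists c. split; [exact Pc|]. rewrite derive_pt_id in E. simpl in E. unfold id in E. lra.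
Qed.

Lemma barrier_nonneg (f df : R -> R) a t : a <= t ->
  (forall z, a <= z <= t -> continuous f z) ->
  (forall z, a < z <= t -> is_derive f z (df z)) ->
  (forall z, a < z <= t -> f z < 0 -> 0 <= df z) ->
  0 <= f a -> 0 <= f t.
Proof.
  intros Hat Hc Hd Hs Ha.
  destruct (Rle_lt_dec 0 (f t)) as [|Hft]; auto. exfalso.
  set (E := fun x => a <= x <= t /\ 0 <= f x).
  destruct (completeness E) as [s [Hub Hlub]].
  { exists t. intros x [[_ Hx] _]. exact Hx. }
  { exists a. split; [lra | exact Ha]. }
  assert (Has : a <= s) by (apply Hub; split; [lra | exact Ha]).
  assert (Hst : s <= t) by (apply Hlub; intros x [[_ Hx] _]; exact Hx).
  assert (Hneg : forall x, s < x <= t -> f x < 0).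
  { intros x Hx. destruct (Rlt_le_dec (f x) 0) as [|Hfx]; auto.
    assert (x <= s) by (apply Hub; split; [lra | exact Hfx]). lra. }
  assert (Hfs : 0 <= f s).
  { destruct (Rle_lt_dec 0 (f s)) as [|Hfs]; auto. exfalso.
    pose proof (proj1 (continuity_pt_locally f s)
      (proj2 (continuity_pt_filterlim f s) (Hc s (conj Has Hst)))
      (mkposreal _ (Ropp_0_gt_lt_contravar _ Hfs))) as [d Hd'].
    assert (s <= s - d); [|pose proof (cond_pos d); lra].
    apply Hlub. intros x [Hx Hfx]. destruct (Rle_lt_dec x (s - d)) as [|Hlt]; auto.
    assert (x <= s) by (apply Hub; split; assumption).
    assert (Hb : Rabs (x - s) < d) by (rewrite Rabs_left1; lra).
    specialize (Hd' x Hb). simpl in Hd'. apply Rabs_def2 in Hd'. lra. }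
  assert (Hst' : s < t) by (destruct (Req_dec s t); [subst; lra | lra]).
  destruct (MVT_strict f df s t Hst') as [c [Hc' Ec]].
  - intros x Hx. apply Hd. lra.
  - intros x Hx. apply Hc. lra.
  - assert (0 <= df c) by (apply Hs; [lra | apply Hneg; lra]).
    assert (0 <= df c * (t - s)) by (apply Rmult_le_pos; lra). lra.
Qed.

Lemma continuous_of_lipschitz (f : R -> R) K z :
  (forall s t, Rabs (f s - f t) <= K * Rabs (s - t)) -> continuous f z.
Proof.
  intros Hf. apply continuity_pt_filterlim, continuity_pt_locally. intros eps.
  assert (HK : 0 <= K) by (specialize (Hf 1 0); pose proof (Rabs_pos (f 1 - f 0));
    rewrite Rminus_0_r, Rabs_R1 in Hf; lra).
  assert (Hd : 0 < eps / (K + 1)) by (apply Rdiv_lt_0_compat; [apply cond_pos | lra]).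
  exists (mkposreal _ Hd). intros t Ht. change (Rabs (t - z) < eps / (K + 1)) in Ht.
  eapply Rle_lt_trans; [apply Hf|].
  apply Rle_lt_trans with (K * (eps / (K + 1))); [apply Rmult_le_compat_l; lra|].
  pose proof (cond_pos eps).
  apply Rmult_lt_reg_r with (K + 1); [lra|].
  replace (K * (eps / (K + 1)) * (K + 1)) with (K * eps) by (field; lra). nra.
Qed.

Lemma Rle_of_is_lim_seq (u : nat -> R) (l B : R) : is_lim_seq u l -> (forall n, u n <= B) -> l <= B.
Proof.
  intros Hu Hb.
  exact (is_lim_seq_le u (fun _ => B) l B Hb Hu (is_lim_seq_const B)).
Qed.

(** * Picard iteration on a half-line *)

Section Picard.

Variables (f : R -> R -> R) (a y0 L C M : R) (Y0 : R -> R).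
Hypotheses
  (L_pos : 0 < L)
  (f_cont : forall g, (forall t, continuous g t) -> forall t, continuous (fun s => f s (g s)) t)
  (f_lip : forall t y1 y2, Rabs (f t y1 - f t y2) <= L * Rabs (y1 - y2))
  (f_bound : forall t y, Rabs (f t y) <= C)
  (Y0_cont : forall t, continuous Y0 t)
  (Y0_close : forall z, a <= z -> Rabs (y0 - Y0 z) <= M).

Fixpoint picard (n : nat) : R -> R :=
  match n with
  | O => Y0
  | S m => fun z => y0 + RInt (fun s => f s (picard m s)) a z
  end.

Lemma picard_cont_derive n :
  (forall z, continuous (picard n) z) /\
  (forall z, is_derive (picard (S n)) z (f z (picard n z))).
Proof.
  induction n as [|n [_ Hder]].
  - split; [exact Y0_cont|]. intros z.
    apply (is_derive_const_plus_RInt (fun s => f s (Y0 s))). now apply f_cont.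
  - assert (Hcont : forall z, continuous (picard (S n)) z).
    { intros z. apply (ex_derive_continuous (picard (S n))). eexists. apply Hder. }
    split; [exact Hcont|]. intros z.
    apply (is_derive_const_plus_RInt (fun s => f s (picard (S n) s))). now apply f_cont.
Qed.

Lemma picard_cont n z : continuous (picard n) z.
Proof. apply picard_cont_derive. Qed.

Lemma picard_field_cont n z : continuous (fun s => f s (picard n s)) z.
Proof. apply f_cont, picard_cont. Qed.

Lemma picard_lip n s t : Rabs (picard (S n) s - picard (S n) t) <= C * Rabs (s - t).
Proof.
  apply (Rabs_sub_le_of_derive_bound _ (fun z => f z (picard n z))); [|intros; apply f_bound].
  intros z. apply picard_cont_derive.
Qed.

Lemma field_bound_nonneg : 0 <= C.
Proof. pose proof (f_bound 0 0). pose proof (Rabs_pos (f 0 0)). lra. Qed.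

Lemma init_dist_nonneg : 0 <= M.
Proof. pose proof (Y0_close a (Rle_refl a)). pose proof (Rabs_pos (y0 - Y0 a)). lra. Qed.

(* The weighted sup norm with weight [exp (- 2 L (z - a))] makes the Picard map a
   contraction of ratio [1/2]. *)
Let expw (z : R) : R := exp (2 * L * (z - a)).
Let D : R := C / (2 * L) + M.

Lemma picard_const_nonneg : 0 <= D.
Proof.
  pose proof field_bound_nonneg. pose proof init_dist_nonneg.
  assert (0 <= C / (2 * L)) by (apply Rmult_le_pos; [lra | apply Rlt_le, Rinv_0_lt_compat; lra]).
  unfold D. lra.
Qed.

Lemma expw_ge z : a <= z -> 1 + 2 * L * (z - a) <= expw z.
Proof.
  intros Hz. unfold expw. destruct (Req_dec z a) as [->|].
  - replace (2 * L * (a - a)) with 0 by ring. rewrite exp_0. lra.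
  - left. apply exp_ineq1.
    assert (0 < 2 * L * (z - a)) by (apply Rmult_lt_0_compat; lra). lra.
Qed.

Lemma expw_pos z : 0 < expw z.
Proof. apply exp_pos. Qed.

Lemma expw_le x z : x <= z -> expw x <= expw z.
Proof.
  intros Hxz. unfold expw. destruct (Req_dec x z) as [->|]; [lra|].
  left. apply exp_increasing. nra.
Qed.

Lemma expw_cont z : continuous expw z.
Proof. apply (ex_derive_continuous expw). unfold expw. auto_derive. exact I. Qed.

Lemma RInt_expw z : RInt expw a z = (expw z - 1) / (2 * L).
Proof.
  assert (HI : is_RInt expw a z (minus (expw z / (2 * L)) (expw a / (2 * L)))).
  { apply (is_RInt_derive (V := R_CompleteNormedModule) (fun s => expw s / (2 * L))).
    - intros x _. unfold expw. auto_derive; [exact I|]. rewrite <- (Rminus_def x a). field. lra.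
    - intros x _. apply expw_cont. }
  rewrite (is_RInt_unique _ _ _ _ HI). unfold minus, plus, opp; simpl.
  unfold expw. replace (2 * L * (a - a)) with 0 by ring. rewrite exp_0. field. lra.
Qed.

Lemma picard_RInt_sub n m z :
  picard (S n) z - picard (S m) z
  = RInt (fun s => f s (picard n s) - f s (picard m s)) a z.
Proof.
  simpl. rewrite (RInt_minus (V := R_CompleteNormedModule)
    (fun s => f s (picard n s)) (fun s => f s (picard m s))).
  - unfold minus, plus, opp; simpl. ring.
  - apply ex_RInt_continuous_R. intros. apply picard_field_cont.
  - apply ex_RInt_continuous_R. intros. apply picard_field_cont.
Qed.

Lemma picard_step_bound n z : a <= z ->
  Rabs (picard (S n) z - picard n z) <= D * (/ 2) ^ n * expw z.
Proof.
  pose proof field_bound_nonneg. pose proof picard_const_nonneg.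
  revert z. induction n as [|n IH]; intros z Hz.
  - assert (HI : Rabs (RInt (fun s => f s (Y0 s)) a z) <= RInt (fun _ => C) a z).
    { apply abs_RInt_le_RInt; [exact Hz | | |]; intros.
      - apply (picard_field_cont 0).
      - apply continuous_const.
      - apply f_bound. }
    rewrite RInt_const in HI. unfold scal in HI; simpl in HI; unfold mult in HI; simpl in HI.
    pose proof (Y0_close z Hz). pose proof (expw_ge z Hz) as Hw. pose proof init_dist_nonneg.
    simpl picard. rewrite pow_O, Rmult_1_r.
    replace (y0 + RInt (fun s => f s (Y0 s)) a z - Y0 z)
      with (RInt (fun s => f s (Y0 s)) a z + (y0 - Y0 z)) by ring.
    eapply Rle_trans; [apply Rabs_triang|].
    assert ((z - a) * C = C / (2 * L) * (2 * L * (z - a))) by (field; lra).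
    assert (0 <= C / (2 * L)) by (apply Rmult_le_pos; [lra | apply Rlt_le, Rinv_0_lt_compat; lra]).
    assert (0 <= z - a) by lra.
    assert (0 <= C / (2 * L) * (expw z - (1 + 2 * L * (z - a)))) by (apply Rmult_le_pos; lra).
    assert (0 <= M * (expw z - 1)) by (apply Rmult_le_pos; nra).
    unfold D. nra.
  - rewrite picard_RInt_sub.
    eapply Rle_trans.
    { apply (abs_RInt_le_RInt _ (fun s => L * (D * (/ 2) ^ n) * expw s)); [exact Hz | | |].
      - intros. apply continuous_Rminus; apply picard_field_cont.
      - intros. apply continuous_Rmult; [apply continuous_const | apply expw_cont].
      - intros x Hx. eapply Rle_trans; [apply f_lip|]. rewrite Rmult_assoc.
        apply Rmult_le_compat_l; [lra|]. apply IH. lra. }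
    rewrite (RInt_scal (V := R_CompleteNormedModule) expw), RInt_expw
      by (apply ex_RInt_continuous_R; intros; apply expw_cont).
    unfold scal; simpl; unfold mult; simpl.
    assert (0 <= D * (/ 2) ^ n) by (apply Rmult_le_pos; [lra | apply pow_le; lra]).
    replace (L * (D * (/ 2) ^ n) * ((expw z - 1) / (2 * L)))
      with (D * (/ 2) ^ n * / 2 * (expw z - 1)) by (field; lra).
    simpl pow. pose proof (expw_ge z Hz). nra.
Qed.

Lemma picard_dist n m z : a <= z -> (n <= m)%nat ->
  Rabs (picard m z - picard n z) <= 2 * D * (/ 2) ^ n * expw z.
Proof.
  intros Hz Hnm. pose proof picard_const_nonneg. pose proof (expw_pos z).
  assert (Hn : 0 < (/ 2) ^ n) by (apply pow_lt; lra).
  replace m with ((m - n) + n)%nat by lia.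
  enough (forall k, Rabs (picard (k + n) z - picard n z)
                    <= 2 * D * (/ 2) ^ n * (1 - (/ 2) ^ k) * expw z) as Hk.
  { eapply Rle_trans; [apply Hk|].
    assert (0 < (/ 2) ^ (m - n)) by (apply pow_lt; lra).
    assert (0 <= 2 * D * (/ 2) ^ n * expw z) by (repeat apply Rmult_le_pos; lra). nra. }
  induction k as [|k IH].
  - simpl. unfold Rminus. rewrite Rplus_opp_r, Rabs_R0. lra.
  - replace (picard (S k + n) z - picard n z)
      with ((picard (S (k + n)) z - picard (k + n) z) + (picard (k + n) z - picard n z))
      by (simpl; ring).
    eapply Rle_trans; [apply Rabs_triang|].
    pose proof (picard_step_bound (k + n) z Hz) as Hs. rewrite pow_add in Hs.
    replace (2 * D * (/ 2) ^ n * (1 - (/ 2) ^ S k) * expw z)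
      with (D * ((/ 2) ^ k * (/ 2) ^ n) * expw z
            + 2 * D * (/ 2) ^ n * (1 - (/ 2) ^ k) * expw z) by (simpl; field).
    lra.
Qed.

(* Frozen at [picard_lim a] on [(-oo, a]], which keeps it globally Lipschitz. *)
Definition picard_lim (z : R) : R := real (Lim_seq (fun n => picard n (Rmax z a))).

Lemma is_lim_seq_picard z : is_lim_seq (fun n => picard n (Rmax z a)) (picard_lim z).
Proof.
  set (w := Rmax z a). assert (Hw : a <= w) by apply Rmax_r.
  pose proof picard_const_nonneg. pose proof (expw_pos w).
  assert (Hc : ex_finite_lim_seq (fun n => picard n w)).
  { apply ex_lim_seq_cauchy_corr. intros eps.
    assert (Hl : is_lim_seq (fun n => 4 * D * expw w * (/ 2) ^ n) 0).
    { replace (Finite 0) with (Rbar_mult (4 * D * expw w) 0) by (simpl; f_equal; ring).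
      apply is_lim_seq_scal_l, is_lim_seq_geom. rewrite Rabs_right; lra. }
    apply is_lim_seq_spec in Hl. destruct (Hl eps) as [N HN].
    exists N. intros n m Hn Hm.
    pose proof (picard_dist N n w Hw Hn). pose proof (picard_dist N m w Hw Hm).
    specialize (HN N (le_n N)). rewrite Rminus_0_r in HN.
    eapply Rle_lt_trans; [|apply HN].
    replace (picard n w - picard m w)
      with ((picard n w - picard N w) - (picard m w - picard N w)) by ring.
    eapply Rle_trans; [apply Rabs_triang|]. rewrite Rabs_Ropp.
    assert (0 < (/ 2) ^ N) by (apply pow_lt; lra).
    assert (0 <= 4 * D * expw w * (/ 2) ^ N)
      by (apply Rmult_le_pos; [apply Rmult_le_pos; [apply Rmult_le_pos|]|]; lra).
    rewrite (Rabs_right (4 * D * expw w * (/ 2) ^ N)) by lra. lra. }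
  destruct Hc as [l Hl]. unfold picard_lim. fold w.
  rewrite (is_lim_seq_unique _ _ Hl). exact Hl.
Qed.

Lemma picard_lim_dist n z : a <= z ->
  Rabs (picard_lim z - picard n z) <= 2 * D * (/ 2) ^ n * expw z.
Proof.
  intros Hz. pose proof (is_lim_seq_picard z) as Hl. rewrite Rmax_left in Hl by lra.
  apply (is_lim_seq_incr_n _ n) in Hl.
  apply (Rle_of_is_lim_seq (fun k => Rabs (picard (k + n) z - picard n z))).
  - apply (is_lim_seq_abs _ (picard_lim z - picard n z)).
    apply is_lim_seq_minus'; [exact Hl | apply is_lim_seq_const].
  - intros k. apply picard_dist; [exact Hz | lia].
Qed.

Lemma Rabs_Rmax_sub s t : Rabs (Rmax s a - Rmax t a) <= Rabs (s - t).
Proof. unfold Rmax. repeat destruct Rle_dec; unfold Rabs; repeat destruct Rcase_abs; lra. Qed.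

Lemma picard_lim_lip s t : Rabs (picard_lim s - picard_lim t) <= C * Rabs (s - t).
Proof.
  pose proof (proj1 (is_lim_seq_incr_1 _ _) (is_lim_seq_picard s)) as Hs.
  pose proof (proj1 (is_lim_seq_incr_1 _ _) (is_lim_seq_picard t)) as Ht.
  apply (Rle_of_is_lim_seq (fun n => Rabs (picard (S n) (Rmax s a) - picard (S n) (Rmax t a)))).
  - apply (is_lim_seq_abs _ (picard_lim s - picard_lim t)), is_lim_seq_minus'; assumption.
  - intros n. eapply Rle_trans; [apply picard_lip|].
    apply Rmult_le_compat_l; [apply field_bound_nonneg | apply Rabs_Rmax_sub].
Qed.

Lemma picard_lim_cont z : continuous picard_lim z.
Proof. apply (continuous_of_lipschitz _ C), picard_lim_lip. Qed.

Lemma picard_lim_field_cont z : continuous (fun s => f s (picard_lim s)) z.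
Proof. apply f_cont, picard_lim_cont. Qed.

Lemma picard_lim_integral z : a <= z ->
  picard_lim z = y0 + RInt (fun s => f s (picard_lim s)) a z.
Proof.
  intros Hz. pose proof picard_const_nonneg. pose proof (expw_pos z).
  cut (picard_lim z - y0 - RInt (fun s => f s (picard_lim s)) a z = 0); [lra|].
  apply (eq_0_of_le_geom _ (2 * D * expw z * (1 + L * (z - a)))). intros n.
  assert (Hn : 0 < (/ 2) ^ n) by (apply pow_lt; lra).
  set (g1 := fun s => f s (picard n s)). set (g := fun s => f s (picard_lim s)).
  assert (E : RInt g1 a z - RInt g a z = RInt (fun s => g1 s - g s) a z).
  { rewrite (RInt_minus (V := R_CompleteNormedModule) g1 g).
    - reflexivity.
    - apply ex_RInt_continuous_R. intros. apply picard_field_cont.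
    - apply ex_RInt_continuous_R. intros. apply picard_lim_field_cont. }
  replace (picard_lim z - y0 - RInt g a z)
    with ((picard_lim z - picard (S n) z) + (RInt g1 a z - RInt g a z))
    by (change (picard (S n) z) with (y0 + RInt g1 a z); ring).
  rewrite E. eapply Rle_trans; [apply Rabs_triang|].
  assert (B1 : Rabs (picard_lim z - picard (S n) z) <= D * (/ 2) ^ n * expw z).
  { eapply Rle_trans; [apply picard_lim_dist; exact Hz|]. simpl pow. right. field. }
  assert (B2 : Rabs (RInt (fun s => g1 s - g s) a z)
               <= RInt (fun _ => L * (2 * D * (/ 2) ^ n * expw z)) a z).
  { apply abs_RInt_le_RInt; [exact Hz | | |]; intros x Hx.
    - apply continuous_Rminus; [apply picard_field_cont | apply picard_lim_field_cont].
    - apply continuous_const.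
    - unfold g1, g. rewrite <- Rabs_Ropp, Ropp_minus_distr.
      eapply Rle_trans; [apply f_lip|]. apply Rmult_le_compat_l; [lra|].
      eapply Rle_trans; [apply picard_lim_dist; lra|].
      apply Rmult_le_compat_l; [apply Rmult_le_pos; lra | apply expw_le; lra]. }
  rewrite RInt_const in B2. unfold scal in B2; simpl in B2; unfold mult in B2; simpl in B2.
  assert (0 <= D * (/ 2) ^ n * expw z) by (apply Rmult_le_pos; [apply Rmult_le_pos|]; lra).
  nra.
Qed.

Lemma is_derive_picard_lim z : a < z -> is_derive picard_lim z (f z (picard_lim z)).
Proof.
  intros Hz.
  apply (is_derive_ext_loc (fun b => y0 + RInt (fun s => f s (picard_lim s)) a b)).
  - apply (filter_imp (fun b => a < b)); [|now apply open_gt].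
    intros b Hb. symmetry. apply picard_lim_integral. lra.
  - apply (is_derive_const_plus_RInt (fun s => f s (picard_lim s))).
    apply picard_lim_field_cont.
Qed.

Lemma picard_lim_start : picard_lim a = y0.
Proof. rewrite picard_lim_integral, RInt_point by lra. unfold zero; simpl. ring. Qed.

Lemma picard_lim_agree (S : R -> R) b :
  (forall z, a <= z <= b -> Y0 z = S z /\ S z = y0 + RInt (fun s => f s (S s)) a z) ->
  forall z, a <= z <= b -> picard_lim z = S z.
Proof.
  intros HS z Hz.
  assert (Hn : forall n x, a <= x <= b -> picard n x = S x).
  { induction n as [|n IH]; intros x Hx; [now apply HS|].
    simpl. rewrite (proj2 (HS x Hx)). f_equal.
    apply RInt_ext. intros s Hs. rewrite Rmin_left, Rmax_right in Hs by lra.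
    rewrite IH by lra. reflexivity. }
  pose proof (is_lim_seq_picard z) as Hl. rewrite Rmax_left in Hl by lra.
  apply (is_lim_seq_ext _ (fun _ => S z)) in Hl; [|intros n; now apply Hn].
  apply is_lim_seq_unique in Hl. rewrite Lim_seq_const in Hl. now injection Hl.
Qed.

End Picard.

(** * The radial solution on [[0, +oo)] *)

Definition clamp (lo hi y : R) : R := Rmax lo (Rmin y hi).

Lemma clamp_range lo hi y : lo <= hi -> lo <= clamp lo hi y <= hi.
Proof. intros. unfold clamp, Rmax, Rmin. repeat destruct Rle_dec; lra. Qed.

Lemma clamp_lip lo hi y1 y2 : lo <= hi ->
  Rabs (clamp lo hi y1 - clamp lo hi y2) <= Rabs (y1 - y2).
Proof.
  intros. unfold clamp, Rmax, Rmin.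
  repeat destruct Rle_dec; unfold Rabs; repeat destruct Rcase_abs; lra.
Qed.

Lemma clamp_id lo hi y : lo <= y <= hi -> clamp lo hi y = y.
Proof. intros. unfold clamp, Rmax, Rmin. repeat destruct Rle_dec; lra. Qed.

Lemma clamp_below lo hi y : lo <= hi -> y < lo -> clamp lo hi y = lo.
Proof. intros. unfold clamp, Rmax, Rmin. repeat destruct Rle_dec; lra. Qed.

Lemma clamp_above lo hi y : lo <= hi -> hi < y -> clamp lo hi y = hi.
Proof. intros. unfold clamp, Rmax, Rmin. repeat destruct Rle_dec; lra. Qed.

Definition upper_barrier (z : R) : R := 2 / sqrt (sinh_sq z).

Definition z_start : R := rho / 4.
Definition z_switch : R := rho / 2.

(* Kept away from the singularity [z = 0] and cut off outside the barriers, so that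
   Picard iteration applies on all of [R]. *)
Definition trunc_field (t y : R) : R :=
  radial_field (Rmax t z_start) (clamp 0 (upper_barrier (Rmax t z_start)) y).

Lemma z_start_pos : 0 < z_start.
Proof. unfold z_start. pose proof rho_pos. lra. Qed.

Lemma z_start_lt_switch : z_start < z_switch.
Proof. unfold z_start, z_switch. pose proof rho_pos. lra. Qed.

Lemma sinh_sq_le z w : 0 < z -> z <= w -> sinh_sq z <= sinh_sq w.
Proof. intros. unfold sinh_sq. nra. Qed.

Lemma sqrt_sinh_sq_pos z : 0 < z -> 0 < sqrt (sinh_sq z).
Proof. intros. apply sqrt_lt_R0, sinh_sq_pos. assumption. Qed.

Lemma upper_barrier_pos w : 0 < w -> 0 < upper_barrier w.
Proof. intros. apply Rdiv_lt_0_compat; [lra | now apply sqrt_sinh_sq_pos]. Qed.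

Lemma sinh_sq_upper_barrier w : 0 < w -> sinh_sq w * upper_barrier w ^ 2 = 4.
Proof.
  intros Hw. pose proof (sqrt_sinh_sq_pos w Hw). pose proof (sinh_sq_pos w Hw).
  unfold upper_barrier. replace ((2 / sqrt (sinh_sq w)) ^ 2) with (4 / sqrt (sinh_sq w) ^ 2)
    by (field; lra).
  rewrite <- Rsqr_pow2, Rsqr_sqrt by lra. field. lra.
Qed.

Lemma upper_barrier_le w : z_start <= w -> upper_barrier w <= upper_barrier z_start.
Proof.
  intros Hw. pose proof z_start_pos. unfold upper_barrier, Rdiv.
  apply Rmult_le_compat_l; [lra|]. apply Rinv_le_contravar; [now apply sqrt_sinh_sq_pos|].
  apply sqrt_le_1_alt, sinh_sq_le; lra.
Qed.

Lemma upper_barrier_ge_2 z : 0 < z <= z_switch -> 2 <= upper_barrier z.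
Proof.
  intros Hz. pose proof rho_pos.
  assert (rho <= 1 / 4) by (unfold rho; lra).
  assert (Hs : sinh_sq z <= 1) by (unfold sinh_sq, z_switch in *; nra).
  pose proof (sqrt_sinh_sq_pos z (proj1 Hz)).
  assert (sqrt (sinh_sq z) <= 1) by (rewrite <- sqrt_1; now apply sqrt_le_1_alt).
  unfold upper_barrier. apply Rmult_le_reg_r with (sqrt (sinh_sq z)); [lra|].
  unfold Rdiv. rewrite Rmult_assoc, Rinv_l by lra. nra.
Qed.

Lemma succ_div_sinh_sq_le w : z_start <= w ->
  (w + 1) / sinh_sq w <= (z_start + 1) / sinh_sq z_start.
Proof.
  intros Hw. pose proof z_start_pos.
  pose proof (sinh_sq_pos z_start H). pose proof (sinh_sq_pos w ltac:(lra)).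
  unfold Rdiv. apply Rmult_le_reg_r with (sinh_sq w * sinh_sq z_start); [nra|].
  replace ((w + 1) * / sinh_sq w * (sinh_sq w * sinh_sq z_start)) with ((w + 1) * sinh_sq z_start)
    by (field; lra).
  replace ((z_start + 1) * / sinh_sq z_start * (sinh_sq w * sinh_sq z_start))
    with ((z_start + 1) * sinh_sq w) by (field; lra).
  unfold sinh_sq. assert (0 <= (w - z_start) * z_start) by nra.
  assert (0 <= (w - z_start) * (w - z_start) * z_start) by (apply Rmult_le_pos; nra). nra.
Qed.

Lemma radial_field_expand w u : 0 < w ->
  radial_field w u = 2 / sinh_sq w - 2 * ((w + 1) / sinh_sq w) * u + 2 * u ^ 2
                     - (w + 1) / sinh_sq w * (sinh_sq w * u ^ 2) * u.
Proof. intros. pose proof (sinh_sq_pos w H). unfold radial_field. field. lra. Qed.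

Lemma radial_field_sub w u1 u2 : 0 < w ->
  radial_field w u1 - radial_field w u2
  = (u1 - u2) * (- 2 * ((w + 1) / sinh_sq w) + 2 * (u1 + u2)
     - (w + 1) / sinh_sq w
       * (sinh_sq w * u1 * u1 + sinh_sq w * u1 * u2 + sinh_sq w * u2 * u2)).
Proof. intros. pose proof (sinh_sq_pos w H). unfold radial_field. field. lra. Qed.

Definition trunc_lip : R :=
  14 * ((z_start + 1) / sinh_sq z_start) + 4 * upper_barrier z_start.

Definition trunc_bound : R :=
  2 / sinh_sq z_start + 6 * ((z_start + 1) / sinh_sq z_start) * upper_barrier z_start
  + 2 * upper_barrier z_start ^ 2.

Lemma trunc_lip_pos : 0 < trunc_lip.
Proof.
  pose proof z_start_pos. pose proof (sinh_sq_pos _ H). pose proof (upper_barrier_pos _ H).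
  assert (0 < (z_start + 1) / sinh_sq z_start) by (apply Rdiv_lt_0_compat; lra).
  unfold trunc_lip. lra.
Qed.

Section TruncatedValues.

Variables (w u1 u2 : R).
Hypotheses (Hw : z_start <= w)
  (Hu1 : 0 <= u1 <= upper_barrier w) (Hu2 : 0 <= u2 <= upper_barrier w).

Lemma truncated_value_bounds :
  0 <= sinh_sq w * u1 * u2 <= 4 /\ 0 <= (w + 1) / sinh_sq w <= (z_start + 1) / sinh_sq z_start
  /\ u1 <= upper_barrier z_start.
Proof.
  pose proof z_start_pos. pose proof (sinh_sq_pos w ltac:(lra)).
  pose proof (sinh_sq_upper_barrier w ltac:(lra)). pose proof (upper_barrier_le w Hw).
  split; [|split; [split | lra]].
  - split; [apply Rmult_le_pos; [apply Rmult_le_pos|]; lra|].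
    assert (u1 * u2 <= upper_barrier w ^ 2) by (simpl; nra). nra.
  - apply Rlt_le, Rdiv_lt_0_compat; lra.
  - now apply succ_div_sinh_sq_le.
Qed.

End TruncatedValues.

Lemma trunc_field_lip t y1 y2 :
  Rabs (trunc_field t y1 - trunc_field t y2) <= trunc_lip * Rabs (y1 - y2).
Proof.
  unfold trunc_field. set (w := Rmax t z_start).
  assert (Hw : z_start <= w) by apply Rmax_r. pose proof z_start_pos.
  assert (Hb : 0 <= upper_barrier w) by (apply Rlt_le, upper_barrier_pos; lra).
  pose proof (clamp_range _ _ y1 Hb). pose proof (clamp_range _ _ y2 Hb).
  pose proof (clamp_lip _ _ y1 y2 Hb).
  set (u1 := clamp 0 (upper_barrier w) y1) in *. set (u2 := clamp 0 (upper_barrier w) y2) in *.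
  destruct (truncated_value_bounds w u1 u1 Hw) as [P11 [Pr PB1]]; auto.
  destruct (truncated_value_bounds w u1 u2 Hw) as [P12 _]; auto.
  destruct (truncated_value_bounds w u2 u2 Hw) as [P22 [_ PB2]]; auto.
  rewrite radial_field_sub, Rabs_mult, Rmult_comm by lra.
  apply Rmult_le_compat; try apply Rabs_pos; auto.
  set (r := (w + 1) / sinh_sq w) in *.
  assert (0 <= r * (sinh_sq w * u1 * u1 + sinh_sq w * u1 * u2 + sinh_sq w * u2 * u2)
            <= (z_start + 1) / sinh_sq z_start * 12)
    by (split; [apply Rmult_le_pos | apply Rmult_le_compat]; lra).
  unfold trunc_lip. apply Rabs_le. split; nra.
Qed.

Lemma trunc_field_bounded t y : Rabs (trunc_field t y) <= trunc_bound.
Proof.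
  unfold trunc_field. set (w := Rmax t z_start).
  assert (Hw : z_start <= w) by apply Rmax_r. pose proof z_start_pos.
  assert (Hb : 0 <= upper_barrier w) by (apply Rlt_le, upper_barrier_pos; lra).
  pose proof (clamp_range _ _ y Hb). set (u := clamp 0 (upper_barrier w) y) in *.
  destruct (truncated_value_bounds w u u Hw) as [Puu [Pr PB]]; auto.
  rewrite radial_field_expand by lra.
  assert (0 <= 2 / sinh_sq w <= 2 / sinh_sq z_start).
  { pose proof (sinh_sq_pos _ H). pose proof (sinh_sq_le z_start w H Hw). unfold Rdiv.
    split; [apply Rmult_le_pos; [lra | apply Rlt_le, Rinv_0_lt_compat; lra]|].
    apply Rmult_le_compat_l; [lra|]. apply Rinv_le_contravar; lra. }
  set (r := (w + 1) / sinh_sq w) in *. set (c0 := (z_start + 1) / sinh_sq z_start) in *.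
  set (B0 := upper_barrier z_start) in *.
  assert (0 <= r * u <= c0 * B0) by (split; [apply Rmult_le_pos | apply Rmult_le_compat]; lra).
  assert (0 <= r * (sinh_sq w * u ^ 2) * u <= c0 * 4 * B0).
  { replace (sinh_sq w * u ^ 2) with (sinh_sq w * u * u) by ring.
    split; [repeat apply Rmult_le_pos; lra|].
    apply Rmult_le_compat; [apply Rmult_le_pos; lra | lra | apply Rmult_le_compat; lra | lra]. }
  assert (u ^ 2 <= B0 ^ 2) by (simpl; nra).
  unfold trunc_bound. fold c0 B0. apply Rabs_le. split; nra.
Qed.

Lemma trunc_field_cont (g : R -> R) s :
  continuous g s -> continuous (fun t => trunc_field t (g t)) s.
Proof.
  intros Hg. pose proof z_start_pos.
  set (w := fun t => Rmax t z_start).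
  set (cl := fun t => clamp 0 (upper_barrier (w t)) (g t)).
  assert (Hws : 0 < w s) by (pose proof (Rmax_r s z_start); unfold w; lra).
  assert (Hw : continuous w s)
    by (apply continuous_Rmax; [apply continuous_id | apply continuous_const]).
  assert (Hw1 : continuous (fun t => w t + 1) s)
    by (apply continuous_Rplus; [exact Hw | apply continuous_const]).
  assert (HH : continuous (fun t => sinh_sq (w t)) s)
    by (apply continuous_Rmult; [|apply continuous_Rplus]; auto using continuous_const).
  assert (Hcl : continuous cl s).
  { apply continuous_Rmax; [apply continuous_const|]. apply continuous_Rmin; [exact Hg|].
    apply continuous_Rdiv; [apply continuous_const | now apply continuous_sqrt_fun |].
    apply Rgt_not_eq, sqrt_sinh_sq_pos, Hws. }
  change (continuous (fun t => ((1 + sinh_sq (w t) * cl t ^ 2) * (2 - (w t + 1) * cl t)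
                                - (w t + 1) * cl t) / sinh_sq (w t)) s).
  apply continuous_Rdiv; [|exact HH | apply Rgt_not_eq, sinh_sq_pos, Hws].
  apply continuous_Rminus; apply continuous_Rmult; try assumption.
  - apply continuous_Rplus; [apply continuous_const|].
    apply continuous_Rmult; [exact HH | now apply continuous_pow_fun].
  - apply continuous_Rminus; [apply continuous_const | now apply continuous_Rmult].
Qed.

Lemma series_sol_cont z : Rabs z < rho -> continuous series_sol z.
Proof.
  intros. apply continuity_pt_filterlim, PSeries_continuity, CV_radius_series_coef. assumption.
Qed.

Lemma series_sol_derive z : 0 < z < rho -> is_derive series_sol z (radial_field z (series_sol z)).
Proof.
  intros Hz. assert (Ha : Rabs z < rho) by (rewrite Rabs_right; lra).
  rewrite <- (proj1 (radial_ode_field _ _ _ (proj1 Hz)) (series_sol_ode z Ha)).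
  apply Derive_correct, ex_derive_PSeries, CV_radius_series_coef, Ha.
Qed.

Lemma Rabs_le_half_rho z : z_start <= z <= z_switch -> Rabs z <= rho / 2.
Proof. intros. pose proof z_start_pos. unfold z_switch in *. rewrite Rabs_right; lra. Qed.

Lemma series_sol_range z : z_start <= z <= z_switch -> 3 / 4 <= series_sol z <= 5 / 4.
Proof.
  intros Hz. pose proof (series_sol_bound z (Rabs_le_half_rho z Hz)).
  apply Rabs_le_between in H. lra.
Qed.

Lemma trunc_field_eq t y : z_start <= t -> 0 <= y <= upper_barrier t ->
  trunc_field t y = radial_field t y.
Proof. intros Ht Hy. unfold trunc_field. rewrite Rmax_left, clamp_id; lra. Qed.

Lemma trunc_field_series z : z_start <= z <= z_switch ->
  trunc_field z (series_sol z) = radial_field z (series_sol z).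
Proof.
  intros Hz. pose proof z_start_pos. pose proof (series_sol_range z Hz).
  pose proof (upper_barrier_ge_2 z ltac:(lra)). apply trunc_field_eq; lra.
Qed.

(* Agrees with [series_sol] on [[z_start, z_switch]], hence so do all Picard iterates. *)
Definition series_init (z : R) : R := series_sol (clamp z_start z_switch z).

Definition y_start : R := series_sol z_start.

Lemma series_init_cont z : continuous series_init z.
Proof.
  pose proof z_start_lt_switch.
  apply (continuous_comp (clamp z_start z_switch) series_sol).
  - apply continuous_Rmax; [apply continuous_const|].
    apply continuous_Rmin; [apply continuous_id | apply continuous_const].
  - apply series_sol_cont. pose proof (Rabs_le_half_rho _ (clamp_range z_start z_switch z ltac:(lra))).
    pose proof rho_pos. lra.
Qed.

Lemma series_init_close z : z_start <= z -> Rabs (y_start - series_init z) <= 1 / 2.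
Proof.
  intros. pose proof z_start_lt_switch. unfold y_start, series_init.
  pose proof (series_sol_range z_start ltac:(lra)).
  pose proof (series_sol_range _ (clamp_range z_start z_switch z ltac:(lra))). apply Rabs_le. lra.
Qed.

Lemma trunc_field_comp_cont g : (forall t, continuous g t) ->
  forall t, continuous (fun s => trunc_field s (g s)) t.
Proof. intros. now apply trunc_field_cont. Qed.

Definition outer_sol : R -> R := picard_lim trunc_field z_start y_start series_init.

Lemma outer_sol_cont z : continuous outer_sol z.
Proof.
  exact (picard_lim_cont _ _ _ _ _ _ _ trunc_lip_pos trunc_field_comp_cont trunc_field_lip
    trunc_field_bounded series_init_cont series_init_close z).
Qed.

Lemma outer_sol_derive_trunc z : z_start < z ->
  is_derive outer_sol z (trunc_field z (outer_sol z)).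
Proof.
  exact (is_derive_picard_lim _ _ _ _ _ _ _ trunc_lip_pos trunc_field_comp_cont trunc_field_lip
    trunc_field_bounded series_init_cont series_init_close z).
Qed.

Lemma outer_sol_start : outer_sol z_start = y_start.
Proof.
  exact (picard_lim_start _ _ _ _ _ _ _ trunc_lip_pos trunc_field_comp_cont trunc_field_lip
    trunc_field_bounded series_init_cont series_init_close).
Qed.

Lemma series_sol_integral z : z_start <= z <= z_switch ->
  series_sol z = y_start + RInt (fun s => trunc_field s (series_sol s)) z_start z.
Proof.
  intros Hz. pose proof z_start_pos. pose proof rho_pos.
  assert (HI : is_RInt (fun s => trunc_field s (series_sol s)) z_start z
                 (minus (series_sol z) (series_sol z_start))).
  { apply (is_RInt_derive (V := R_CompleteNormedModule)); intros x Hx;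
      rewrite Rmin_left, Rmax_right in Hx by lra.
    - rewrite trunc_field_series by lra. apply series_sol_derive. unfold z_switch in Hz. lra.
    - apply trunc_field_cont, series_sol_cont. pose proof (Rabs_le_half_rho x ltac:(lra)). lra. }
  rewrite (is_RInt_unique _ _ _ _ HI). unfold y_start, minus, plus, opp; simpl. ring.
Qed.

Lemma outer_sol_series z : z_start <= z <= z_switch -> outer_sol z = series_sol z.
Proof.
  apply (picard_lim_agree _ _ _ _ _ _ _ trunc_lip_pos trunc_field_comp_cont trunc_field_lip
    trunc_field_bounded series_init_cont series_init_close).
  intros x Hx. split; [|now apply series_sol_integral].
  unfold series_init. now rewrite clamp_id.
Qed.

Lemma y_start_range : 3 / 4 <= y_start <= 5 / 4.
Proof. apply series_sol_range. pose proof z_start_lt_switch. lra. Qed.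

Lemma outer_sol_nonneg z : z_start <= z -> 0 <= outer_sol z.
Proof.
  intros Hz. pose proof z_start_pos.
  apply (barrier_nonneg outer_sol (fun t => trunc_field t (outer_sol t)) z_start z Hz).
  - intros. apply outer_sol_cont.
  - intros. apply outer_sol_derive_trunc. lra.
  - intros t Ht Hneg. unfold trunc_field. rewrite Rmax_left, clamp_below by
      (lra || apply Rlt_le, upper_barrier_pos; lra).
    pose proof (sinh_sq_pos t ltac:(lra)). unfold radial_field.
    replace ((1 + sinh_sq t * 0 ^ 2) * (2 - (t + 1) * 0) - (t + 1) * 0) with 2 by ring.
    apply Rlt_le, Rdiv_lt_0_compat; lra.
  - rewrite outer_sol_start. pose proof y_start_range. lra.
Qed.

Definition upper_barrier_slope (t : R) : R := - 2 * (t + 1) / (sinh_sq t * sqrt (sinh_sq t)).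

Lemma is_derive_upper_barrier t : 0 < t -> is_derive upper_barrier t (upper_barrier_slope t).
Proof.
  intros Ht. pose proof (sinh_sq_pos t Ht). pose proof (sqrt_sinh_sq_pos t Ht).
  assert (E : sqrt (sinh_sq t) * sqrt (sinh_sq t) = sinh_sq t) by (apply sqrt_sqrt; lra).
  unfold upper_barrier, upper_barrier_slope, sinh_sq in *. auto_derive; [repeat split; lra|].
  set (s := sqrt (t * (t + 2))) in *. rewrite <- E. field. lra.
Qed.

Lemma upper_barrier_supersolution t : 0 < t ->
  radial_field t (upper_barrier t) < upper_barrier_slope t.
Proof.
  intros Ht. pose proof (sinh_sq_pos t Ht) as Hh. pose proof (sqrt_sinh_sq_pos t Ht).
  assert (E : sqrt (sinh_sq t) * sqrt (sinh_sq t) = sinh_sq t) by (apply sqrt_sqrt; lra).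
  unfold radial_field, upper_barrier, upper_barrier_slope.
  set (s := sqrt (sinh_sq t)) in *. rewrite <- E.
  assert (Hs : s < t + 1) by (unfold sinh_sq in E; nra).
  apply Rminus_lt.
  replace (((1 + s * s * (2 / s) ^ 2) * (2 - (t + 1) * (2 / s)) - (t + 1) * (2 / s)) / (s * s)
           - - 2 * (t + 1) / (s * s * s))
    with (- (10 * (t + 1 - s) / (s * s * s))) by (field; lra).
  assert (0 < 10 * (t + 1 - s) / (s * s * s)); [|lra].
  apply Rdiv_lt_0_compat; [lra | repeat apply Rmult_lt_0_compat; lra].
Qed.

Lemma outer_sol_le_barrier z : z_start <= z -> outer_sol z <= upper_barrier z.
Proof.
  intros Hz. pose proof z_start_pos.
  cut (0 <= upper_barrier z - outer_sol z); [lra|].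
  apply (barrier_nonneg (fun t => upper_barrier t - outer_sol t)
    (fun t => upper_barrier_slope t - trunc_field t (outer_sol t))
    z_start z Hz).
  - intros t Ht. apply continuous_Rminus; [|apply outer_sol_cont].
    apply (ex_derive_continuous upper_barrier). eexists. apply is_derive_upper_barrier. lra.
  - intros t Ht. apply (is_derive_minus upper_barrier outer_sol).
    + apply is_derive_upper_barrier. lra.
    + apply outer_sol_derive_trunc. lra.
  - intros t Ht Hneg. unfold trunc_field. rewrite Rmax_left, clamp_above by
      (lra || apply Rlt_le, upper_barrier_pos; lra).
    pose proof (upper_barrier_supersolution t ltac:(lra)). lra.
  - rewrite outer_sol_start. pose proof y_start_range.
    pose proof (upper_barrier_ge_2 z_start ltac:(pose proof z_start_lt_switch; lra)). lra.
Qed.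

Lemma outer_sol_derive z : z_start < z ->
  is_derive outer_sol z (radial_field z (outer_sol z)).
Proof.
  intros Hz. rewrite <- trunc_field_eq; [now apply outer_sol_derive_trunc | lra |].
  split; [apply outer_sol_nonneg | apply outer_sol_le_barrier]; lra.
Qed.

(** * Smoothness of the radial solution *)

(* Polynomials in [z], [p] and [1 / sinh_sq z]: a class closed under differentiation
   along solutions of the radial equation, which gives their smoothness. *)
Inductive zp_expr : Type :=
| ZPconst (c : R) | ZPz | ZPp | ZPinv_sinh_sq
| ZPadd (e1 e2 : zp_expr) | ZPmul (e1 e2 : zp_expr).

Fixpoint zp_eval (e : zp_expr) (z p : R) : R :=
  match e with
  | ZPconst c => c
  | ZPz => z
  | ZPp => p
  | ZPinv_sinh_sq => / sinh_sq z
  | ZPadd e1 e2 => zp_eval e1 z p + zp_eval e2 z p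
  | ZPmul e1 e2 => zp_eval e1 z p * zp_eval e2 z p
  end.

Fixpoint zp_dz (e : zp_expr) : zp_expr :=
  match e with
  | ZPconst _ | ZPp => ZPconst 0
  | ZPz => ZPconst 1
  | ZPinv_sinh_sq =>
      ZPmul (ZPmul (ZPconst (-1)) (ZPadd (ZPmul (ZPconst 2) ZPz) (ZPconst 2)))
            (ZPmul ZPinv_sinh_sq ZPinv_sinh_sq)
  | ZPadd e1 e2 => ZPadd (zp_dz e1) (zp_dz e2)
  | ZPmul e1 e2 => ZPadd (ZPmul (zp_dz e1) e2) (ZPmul e1 (zp_dz e2))
  end.

Fixpoint zp_dp (e : zp_expr) : zp_expr :=
  match e with
  | ZPconst _ | ZPz | ZPinv_sinh_sq => ZPconst 0
  | ZPp => ZPconst 1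
  | ZPadd e1 e2 => ZPadd (zp_dp e1) (zp_dp e2)
  | ZPmul e1 e2 => ZPadd (ZPmul (zp_dp e1) e2) (ZPmul e1 (zp_dp e2))
  end.

Definition zp_radial_field : zp_expr :=
  ZPadd (ZPadd (ZPadd (ZPmul (ZPconst 2) ZPinv_sinh_sq)
                      (ZPmul (ZPmul (ZPmul (ZPconst (-2)) (ZPadd ZPz (ZPconst 1))) ZPp)
                             ZPinv_sinh_sq))
               (ZPmul (ZPconst 2) (ZPmul ZPp ZPp)))
        (ZPmul (ZPmul (ZPconst (-1)) (ZPadd ZPz (ZPconst 1))) (ZPmul ZPp (ZPmul ZPp ZPp))).

Lemma zp_eval_radial_field z p : 0 < z -> zp_eval zp_radial_field z p = radial_field z p.
Proof. intros. pose proof (sinh_sq_pos z H). unfold radial_field. simpl. field. lra. Qed.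

Definition zp_along (e : zp_expr) : zp_expr := ZPadd (zp_dz e) (ZPmul (zp_dp e) zp_radial_field).

Lemma is_derive_zp_eval_along (Y : R -> R) z : 0 < z ->
  is_derive Y z (radial_field z (Y z)) ->
  forall e, is_derive (fun t => zp_eval e t (Y t)) z (zp_eval (zp_along e) z (Y z)).
Proof.
  intros Hz HY e.
  replace (zp_eval (zp_along e) z (Y z))
    with (zp_eval (zp_dz e) z (Y z) + zp_eval (zp_dp e) z (Y z) * radial_field z (Y z))
    by (unfold zp_along; cbn [zp_eval]; now rewrite zp_eval_radial_field).
  set (F := radial_field z (Y z)) in *.
  induction e as [c| | | |e1 IH1 e2 IH2|e1 IH1 e2 IH2]; cbn [zp_dz zp_dp zp_eval].
  - auto_derive; [exact I | ring].
  - auto_derive; [exact I | ring].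
  - replace (0 + 1 * F) with F by ring. exact HY.
  - pose proof (sinh_sq_pos z Hz). unfold sinh_sq in *.
    replace (-1 * (2 * z + 2) * (/ (z * (z + 2)) * / (z * (z + 2))) + 0 * F)
      with (-1 * (2 * z + 2) * (/ (z * (z + 2)) * / (z * (z + 2)))) by ring.
    auto_derive; [lra | field; lra].
  - replace (zp_eval (zp_dz e1) z (Y z) + zp_eval (zp_dz e2) z (Y z)
             + (zp_eval (zp_dp e1) z (Y z) + zp_eval (zp_dp e2) z (Y z)) * F)
      with (plus (zp_eval (zp_dz e1) z (Y z) + zp_eval (zp_dp e1) z (Y z) * F)
                 (zp_eval (zp_dz e2) z (Y z) + zp_eval (zp_dp e2) z (Y z) * F))
      by (unfold plus; simpl; ring).
    exact (is_derive_plus _ _ _ _ _ IH1 IH2).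
  - set (A1 := zp_eval e1 z (Y z)). set (A2 := zp_eval e2 z (Y z)).
    replace (zp_eval (zp_dz e1) z (Y z) * A2 + A1 * zp_eval (zp_dz e2) z (Y z)
             + (zp_eval (zp_dp e1) z (Y z) * A2 + A1 * zp_eval (zp_dp e2) z (Y z)) * F)
      with ((zp_eval (zp_dz e1) z (Y z) + zp_eval (zp_dp e1) z (Y z) * F) * A2
            + A1 * (zp_eval (zp_dz e2) z (Y z) + zp_eval (zp_dp e2) z (Y z) * F)) by ring.
    apply (is_derive_mult (fun t => zp_eval e1 t (Y t)) (fun t => zp_eval e2 t (Y t)));
      [exact IH1 | exact IH2 | intros; apply Rmult_comm].
Qed.

Fixpoint zp_iter_along (k : nat) : zp_expr :=
  match k with O => ZPp | S k => zp_along (zp_iter_along k) end.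

Section RadialSolutionSmooth.

Variables (Y : R -> R) (lo : R).
Hypotheses (lo_nonneg : 0 <= lo)
  (Y_ode : forall z, lo < z -> is_derive Y z (radial_field z (Y z))).

Lemma Derive_n_radial_ode_sol k z : lo < z -> Derive_n Y k z = zp_eval (zp_iter_along k) z (Y z).
Proof.
  revert z. induction k as [|k IH]; intros z Hz; [reflexivity|].
  simpl Derive_n. rewrite (Derive_ext_loc _ (fun t => zp_eval (zp_iter_along k) t (Y t))).
  - apply is_derive_unique, is_derive_zp_eval_along; [lra | now apply Y_ode].
  - apply (filter_imp (fun t => lo < t)); [intros; now apply IH | now apply open_gt].
Qed.

Lemma ex_derive_n_radial_ode_sol k z : lo < z -> ex_derive (Derive_n Y k) z.
Proof.
  intros Hz. apply (ex_derive_ext_loc (fun t => zp_eval (zp_iter_along k) t (Y t))).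
  - apply (filter_imp (fun t => lo < t)); [|now apply open_gt].
    intros t Ht. symmetry. now apply Derive_n_radial_ode_sol.
  - eexists. apply is_derive_zp_eval_along; [lra | now apply Y_ode].
Qed.

End RadialSolutionSmooth.

Definition radial_sol (z : R) : R := if Rlt_dec z z_switch then series_sol z else outer_sol z.

Lemma radial_sol_series z : z < z_switch -> radial_sol z = series_sol z.
Proof. intros. unfold radial_sol. destruct Rlt_dec; [reflexivity | lra]. Qed.

Lemma radial_sol_outer z : z_start <= z -> radial_sol z = outer_sol z.
Proof.
  intros. unfold radial_sol. destruct Rlt_dec; [|reflexivity].
  symmetry. apply outer_sol_series. lra.
Qed.

Lemma Derive_n_ext_open (f g : R -> R) (D : R -> Prop) k z : open D -> D z ->
  (forall t, D t -> f t = g t) -> locally z (fun t => Derive_n f k t = Derive_n g k t).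
Proof.
  intros HD Hz H. apply (filter_imp D); [|now apply HD].
  intros t Ht. apply Derive_n_ext_loc. apply (filter_imp D); [exact H | now apply HD].
Qed.

Lemma radial_sol_smooth k z : - rho < z -> ex_derive (Derive_n radial_sol k) z.
Proof.
  intros Hz. pose proof z_start_lt_switch. pose proof z_start_pos.
  destruct (Rlt_dec z z_switch) as [Hs|Hs].
  - apply (ex_derive_ext_loc (Derive_n series_sol k)).
    + apply (Derive_n_ext_open _ _ (fun t => t < z_switch)); [apply open_lt | exact Hs |].
      intros. symmetry. now apply radial_sol_series.
    + apply (ex_derive_n_PSeries (S k)), CV_radius_series_coef.
      unfold z_switch in Hs. pose proof rho_pos. apply Rabs_def1; lra.
  - apply (ex_derive_ext_loc (Derive_n outer_sol k)).
    + apply (Derive_n_ext_open _ _ (fun t => z_start < t)); [apply open_gt | lra |].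
      intros. symmetry. apply radial_sol_outer. lra.
    + apply (ex_derive_n_radial_ode_sol outer_sol z_start); [lra | apply outer_sol_derive | lra].
Qed.

Lemma radial_sol_ode z : 0 <= z -> radial_ode z (radial_sol z) (Derive radial_sol z).
Proof.
  intros Hz. pose proof z_start_lt_switch. pose proof z_start_pos. pose proof rho_pos.
  destruct (Rlt_dec z z_switch) as [Hs|Hs].
  - rewrite radial_sol_series by exact Hs.
    rewrite (Derive_ext_loc radial_sol series_sol).
    + apply series_sol_ode. unfold z_switch in Hs. rewrite Rabs_right; lra.
    + apply (filter_imp (fun t => t < z_switch)); [exact radial_sol_series | now apply open_lt].
  - rewrite radial_sol_outer by lra.
    rewrite (Derive_ext_loc radial_sol outer_sol).
    + rewrite (is_derive_unique _ _ _ (outer_sol_derive z ltac:(lra))).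
      apply radial_ode_field; [lra | reflexivity].
    + apply (filter_imp (fun t => z_start < t)); [|apply open_gt; lra].
      intros. apply radial_sol_outer. lra.
Qed.

Lemma radial_sol_cont z : - rho < z -> continuous radial_sol z.
Proof. intros. apply (ex_derive_continuous radial_sol), (radial_sol_smooth 0). assumption. Qed.

Definition radial_primitive (z : R) : R := RInt radial_sol 0 z.

Lemma is_derive_radial_primitive z : - rho < z -> is_derive radial_primitive z (radial_sol z).
Proof.
  intros Hz. pose proof rho_pos.
  apply (is_derive_RInt (V := R_NormedModule) radial_sol radial_primitive 0 z);
    [|now apply radial_sol_cont].
  apply (filter_imp (fun b => - rho < b)); [|now apply open_gt].
  intros b Hb. apply (RInt_correct (V := R_CompleteNormedModule)).
  apply ex_RInt_continuous_R. intros t Ht. apply radial_sol_cont.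
  assert (- rho < Rmin 0 b) by (unfold Rmin; destruct Rle_dec; lra). lra.
Qed.

Lemma Derive_n_radial_primitive k z : - rho < z ->
  Derive_n radial_primitive (S k) z = Derive_n radial_sol k z.
Proof.
  intros Hz. replace (S k) with (k + 1)%nat by lia. rewrite <- (Derive_n_comp radial_primitive k 1).
  apply Derive_n_ext_loc. apply (filter_imp (fun b => - rho < b)); [|now apply open_gt].
  intros b Hb. simpl. now apply is_derive_unique, is_derive_radial_primitive.
Qed.

Lemma is_derive_n_radial_primitive k z : - rho < z ->
  is_derive (Derive_n radial_primitive k) z (Derive_n radial_primitive (S k) z).
Proof.
  intros Hz. apply Derive_correct. destruct k as [|k].
  - eexists. now apply is_derive_radial_primitive.
  - apply (ex_derive_ext_loc (Derive_n radial_sol k)).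
    + apply (filter_imp (fun b => - rho < b)); [|now apply open_gt].
      intros. symmetry. now apply Derive_n_radial_primitive.
    + now apply radial_sol_smooth.
Qed.

(** * The radial graph *)

(* [cosh d - 1], where [d] is the hyperbolic distance from [(x, y)] to [(0, 1)]. *)
Definition cosh_dist_m1 (x y : R) : R := (x ^ 2 + (y - 1) ^ 2) / (2 * y).

Definition radial_graph (x y : R) : R := radial_primitive (cosh_dist_m1 x y).

Lemma cosh_dist_m1_nonneg x y : 0 < y -> 0 <= cosh_dist_m1 x y.
Proof.
  intros. unfold cosh_dist_m1. apply Rmult_le_pos; [|apply Rlt_le, Rinv_0_lt_compat; lra].
  apply Rplus_le_le_0_compat; apply pow2_ge_0.
Qed.

Lemma cosh_dist_m1_gt x y : 0 < y -> - rho < cosh_dist_m1 x y.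
Proof. intros. pose proof (cosh_dist_m1_nonneg x y H). pose proof rho_pos. lra. Qed.

(* Polynomials in [x], [y], [1 / y] and the derivatives of [radial_primitive] at
   [cosh_dist_m1 x y]: a class closed under both partial derivatives. *)
Inductive xy_expr : Type :=
| XYconst (c : R) | XYx | XYy | XYinv_y | XYprim (k : nat)
| XYadd (e1 e2 : xy_expr) | XYmul (e1 e2 : xy_expr).

Fixpoint xy_eval (e : xy_expr) (x y : R) : R :=
  match e with
  | XYconst c => c
  | XYx => x
  | XYy => y
  | XYinv_y => / y
  | XYprim k => Derive_n radial_primitive k (cosh_dist_m1 x y)
  | XYadd e1 e2 => xy_eval e1 x y + xy_eval e2 x y
  | XYmul e1 e2 => xy_eval e1 x y * xy_eval e2 x y
  end.

Definition xy_dist_dx : xy_expr := XYmul XYx XYinv_y.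
Definition xy_dist_dy : xy_expr :=
  XYadd (XYconst (1 / 2))
        (XYmul (XYmul (XYconst (-1 / 2)) (XYadd (XYmul XYx XYx) (XYconst 1)))
               (XYmul XYinv_y XYinv_y)).

Fixpoint xy_dx (e : xy_expr) : xy_expr :=
  match e with
  | XYconst _ | XYy | XYinv_y => XYconst 0
  | XYx => XYconst 1
  | XYprim k => XYmul (XYprim (S k)) xy_dist_dx
  | XYadd e1 e2 => XYadd (xy_dx e1) (xy_dx e2)
  | XYmul e1 e2 => XYadd (XYmul (xy_dx e1) e2) (XYmul e1 (xy_dx e2))
  end.

Fixpoint xy_dy (e : xy_expr) : xy_expr :=
  match e with
  | XYconst _ | XYx => XYconst 0
  | XYy => XYconst 1
  | XYinv_y => XYmul (XYconst (-1)) (XYmul XYinv_y XYinv_y)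
  | XYprim k => XYmul (XYprim (S k)) xy_dist_dy
  | XYadd e1 e2 => XYadd (xy_dy e1) (xy_dy e2)
  | XYmul e1 e2 => XYadd (XYmul (xy_dy e1) e2) (XYmul e1 (xy_dy e2))
  end.

Lemma is_derive_cosh_dist_m1_x x y : 0 < y ->
  is_derive (fun t => cosh_dist_m1 t y) x (xy_eval xy_dist_dx x y).
Proof. intros. unfold cosh_dist_m1. simpl. auto_derive; [lra | field; lra]. Qed.

Lemma is_derive_cosh_dist_m1_y x y : 0 < y ->
  is_derive (fun t => cosh_dist_m1 x t) y (xy_eval xy_dist_dy x y).
Proof. intros. unfold cosh_dist_m1. simpl. auto_derive; [lra | field; lra]. Qed.

Lemma is_derive_xy_eval_x e x y : 0 < y ->
  is_derive (fun t => xy_eval e t y) x (xy_eval (xy_dx e) x y).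
Proof.
  intros Hy. induction e as [c| | | |k|e1 IH1 e2 IH2|e1 IH1 e2 IH2]; cbn [xy_dx xy_eval].
  1-4: auto_derive; [exact I | ring].
  - rewrite Rmult_comm.
    apply (is_derive_comp (Derive_n radial_primitive k) (fun t => cosh_dist_m1 t y)).
    + apply is_derive_n_radial_primitive, cosh_dist_m1_gt, Hy.
    + now apply is_derive_cosh_dist_m1_x.
  - exact (is_derive_plus _ _ _ _ _ IH1 IH2).
  - apply (is_derive_mult (fun t => xy_eval e1 t y) (fun t => xy_eval e2 t y));
      [exact IH1 | exact IH2 | intros; apply Rmult_comm].
Qed.

Lemma is_derive_xy_eval_y e x y : 0 < y ->
  is_derive (fun t => xy_eval e x t) y (xy_eval (xy_dy e) x y).
Proof.
  intros Hy. induction e as [c| | | |k|e1 IH1 e2 IH2|e1 IH1 e2 IH2]; cbn [xy_dy xy_eval].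
  1-3: auto_derive; [exact I | ring].
  - auto_derive; [lra | field; lra].
  - rewrite Rmult_comm.
    apply (is_derive_comp (Derive_n radial_primitive k) (fun t => cosh_dist_m1 x t)).
    + apply is_derive_n_radial_primitive, cosh_dist_m1_gt, Hy.
    + now apply is_derive_cosh_dist_m1_y.
  - exact (is_derive_plus _ _ _ _ _ IH1 IH2).
  - apply (is_derive_mult (fun t => xy_eval e1 x t) (fun t => xy_eval e2 x t));
      [exact IH1 | exact IH2 | intros; apply Rmult_comm].
Qed.

Lemma continuous_xy_eval e x y : 0 < y ->
  continuous (fun p : R * R => xy_eval e (fst p) (snd p)) (x, y).
Proof.
  intros Hy.
  assert (Hq : continuous (fun p : R * R => cosh_dist_m1 (fst p) (snd p)) (x, y)).
  { unfold cosh_dist_m1. apply continuous_Rdiv; [| |simpl; lra].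
    - apply continuous_Rplus; apply continuous_pow_fun; [apply continuous_fst|].
      apply continuous_Rminus; [apply continuous_snd | apply continuous_const].
    - apply continuous_Rmult; [apply continuous_const | apply continuous_snd]. }
  induction e as [c| | | |k|e1 IH1 e2 IH2|e1 IH1 e2 IH2]; cbn [xy_eval].
  - apply continuous_const.
  - apply continuous_fst.
  - apply continuous_snd.
  - apply continuous_Rinv_fun; [apply continuous_snd | simpl; lra].
  - apply (continuous_comp (fun p : R * R => cosh_dist_m1 (fst p) (snd p))
             (Derive_n radial_primitive k)); [exact Hq|].
    apply (ex_derive_continuous (Derive_n radial_primitive k)). eexists.
    apply is_derive_n_radial_primitive, cosh_dist_m1_gt, Hy.
  - now apply continuous_Rplus.
  - now apply continuous_Rmult.
Qed.

Fixpoint xy_partials (w : list bool) : xy_expr :=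
  match w with
  | nil => XYprim 0
  | b :: w' => if b then xy_dy (xy_partials w') else xy_dx (xy_partials w')
  end.

Lemma iter_partial_radial_graph w x y : 0 < y ->
  iter_partial w radial_graph x y = xy_eval (xy_partials w) x y.
Proof.
  revert x y. induction w as [|[] w IH]; intros x y Hy; [reflexivity| |]; simpl.
  - unfold partial_y. rewrite (Derive_ext_loc _ (fun t => xy_eval (xy_partials w) x t)).
    + now apply is_derive_unique, is_derive_xy_eval_y.
    + apply (filter_imp (fun t => 0 < t)); [intros; now apply IH | now apply open_gt].
  - unfold partial_x. rewrite (Derive_ext _ (fun t => xy_eval (xy_partials w) t y)).
    + now apply is_derive_unique, is_derive_xy_eval_x.
    + intros. now apply IH.
Qed.

Lemma radial_graph_smooth : smooth_on_H2 radial_graph.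
Proof.
  intros w x y Hy. unfold in_H2 in Hy. split; [|split].
  - apply (ex_derive_ext (fun t => xy_eval (xy_partials w) t y)).
    + intros. symmetry. now apply iter_partial_radial_graph.
    + eexists. now apply is_derive_xy_eval_x.
  - apply (ex_derive_ext_loc (fun t => xy_eval (xy_partials w) x t)).
    + apply (filter_imp (fun t => 0 < t)); [|now apply open_gt].
      intros. symmetry. now apply iter_partial_radial_graph.
    + eexists. now apply is_derive_xy_eval_y.
  - apply (continuous_ext_loc _ (fun p : R * R => xy_eval (xy_partials w) (fst p) (snd p))).
    + apply (filter_imp (fun p : R * R => 0 < snd p)).
      * intros. symmetry. now apply iter_partial_radial_graph.
      * apply (continuous_snd x y (fun t => 0 < t)). now apply open_gt.
    + now apply continuous_xy_eval.
Qed.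

Lemma rotation_about_0_1 a b c d :
  is_rotation_about 0 1 a b c d -> a = d /\ b = - c /\ c ^ 2 + d ^ 2 = 1.
Proof.
  intros [H1 [H2 H3]]. unfold mobius_x, mobius_y in *.
  replace ((c * 0 + d) ^ 2 + (c * 1) ^ 2) with (c ^ 2 + d ^ 2) in H2, H3 by ring.
  assert (Hs : c ^ 2 + d ^ 2 = 1).
  { unfold Rdiv in H3. rewrite Rmult_1_l in H3.
    now rewrite <- (Rinv_inv (c ^ 2 + d ^ 2)), H3, Rinv_1. }
  rewrite Hs in H2.
  assert (Hbd : a * c + b * d = 0) by (rewrite <- H2; field).
  split; [|split; [|exact Hs]].
  - transitivity (c * (a * c + b * d) + d * (a * d - b * c)).
    + transitivity (a * (c ^ 2 + d ^ 2)); [rewrite Hs | ]; ring.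
    + rewrite Hbd, H1. ring.
  - transitivity (- c * (a * d - b * c) + d * (a * c + b * d)).
    + transitivity (b * (c ^ 2 + d ^ 2)); [rewrite Hs | ]; ring.
    + rewrite Hbd, H1. ring.
Qed.

Lemma cosh_dist_m1_rotation c d x y : c ^ 2 + d ^ 2 = 1 -> 0 < y ->
  cosh_dist_m1 (mobius_x d (- c) c d x y) (mobius_y d (- c) c d x y) = cosh_dist_m1 x y.
Proof.
  intros Hs Hy. unfold mobius_x, mobius_y.
  set (D := (c * x + d) ^ 2 + (c * y) ^ 2).
  set (N := (d * x + - c) * (c * x + d) + d * c * y ^ 2).
  assert (HD : 0 < D).
  { unfold D. destruct (Req_dec c 0) as [->|Hc]; [nra|].
    assert (0 < Rsqr (c * y)) by (apply Rsqr_pos_lt, Rmult_integral_contrapositive_currified; lra).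
    unfold Rsqr in *. pose proof (pow2_ge_0 (c * x + d)). nra. }
  (* [N^2 + (y - D)^2 = D (x^2 + (y - 1)^2)] holds modulo [c^2 + d^2 = 1]. *)
  assert (I1 : N ^ 2 + y ^ 2 = ((d * x - c) ^ 2 + d ^ 2 * y ^ 2) * D).
  { transitivity (N ^ 2 + (c ^ 2 + d ^ 2) ^ 2 * y ^ 2); [rewrite Hs; ring|].
    unfold N, D. ring. }
  assert (I2 : (d * x - c) ^ 2 + d ^ 2 * y ^ 2 + D = x ^ 2 + y ^ 2 + 1).
  { transitivity ((c ^ 2 + d ^ 2) * (x ^ 2 + y ^ 2 + 1)); [unfold D; ring | rewrite Hs; ring]. }
  assert (I3 : N ^ 2 + (y - D) ^ 2 = D * (x ^ 2 + (y - 1) ^ 2)).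
  { replace (N ^ 2 + (y - D) ^ 2) with ((N ^ 2 + y ^ 2) - 2 * y * D + D ^ 2) by ring.
    rewrite I1. replace ((d * x - c) ^ 2 + d ^ 2 * y ^ 2) with (x ^ 2 + y ^ 2 + 1 - D) by lra.
    ring. }
  unfold cosh_dist_m1. fold N D.
  replace (((N / D) ^ 2 + (y / D - 1) ^ 2) / (2 * (y / D)))
    with ((N ^ 2 + (y - D) ^ 2) / (2 * y * D)) by (field; lra).
  rewrite I3. field. lra.
Qed.

Lemma radial_graph_rotation : rotationally_symmetric_about radial_graph 0 1.
Proof.
  intros a b c d Hr x y Hy. destruct (rotation_about_0_1 a b c d Hr) as [-> [-> Hs]].
  unfold radial_graph. now rewrite cosh_dist_m1_rotation.
Qed.

(* With [w = sqrt (1 + sinh_sq z p^2)], the first factor is the derivative of [p / w]: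
   this is the translator equation written in the variable [z]. *)
Lemma translator_identity z p dp w :
  0 < w -> w * w = 1 + sinh_sq z * p ^ 2 -> radial_ode z p dp ->
  / 2 * ((dp / w - p * ((2 * z + 2) * p ^ 2 + 2 * sinh_sq z * p * dp) / (2 * w ^ 3)) * sinh_sq z
         + p / w * (2 * (z + 1))) = / w.
Proof.
  intros Hw Hw2 Hode. unfold radial_ode in Hode.
  transitivity ((sinh_sq z * dp * (w * w) - sinh_sq z * p * ((z + 1) * p ^ 2 + sinh_sq z * p * dp)
                 + 2 * (z + 1) * p * (w * w)) / (2 * w ^ 3)); [field; lra|].
  rewrite Hw2.
  replace (sinh_sq z * dp * (1 + sinh_sq z * p ^ 2)
           - sinh_sq z * p * ((z + 1) * p ^ 2 + sinh_sq z * p * dp)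
           + 2 * (z + 1) * p * (1 + sinh_sq z * p ^ 2))
    with (2 * (1 + sinh_sq z * p ^ 2)
          + (sinh_sq z * dp + (z + 1) * p - (1 + sinh_sq z * p ^ 2) * (2 - (z + 1) * p)))
    by (unfold sinh_sq; ring).
  rewrite Hode, <- Hw2. field. lra.
Qed.

Definition radial_W (z : R) : R := sqrt (1 + sinh_sq z * radial_sol z ^ 2).

Definition radial_G (z : R) : R := radial_sol z / radial_W z.

Definition radial_dG (z : R) : R :=
  Derive radial_sol z / radial_W z
  - radial_sol z
    * ((2 * z + 2) * radial_sol z ^ 2 + 2 * sinh_sq z * radial_sol z * Derive radial_sol z)
    / (2 * radial_W z ^ 3).

Lemma radial_W_sq z : 0 <= z -> radial_W z * radial_W z = 1 + sinh_sq z * radial_sol z ^ 2.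
Proof.
  intros Hz. apply sqrt_sqrt. unfold sinh_sq.
  assert (0 <= z * (z + 2)) by nra. pose proof (pow2_ge_0 (radial_sol z)).
  assert (0 <= z * (z + 2) * radial_sol z ^ 2) by (apply Rmult_le_pos; lra). lra.
Qed.

Lemma radial_W_pos z : 0 <= z -> 0 < radial_W z.
Proof.
  intros Hz. apply sqrt_lt_R0. pose proof (radial_W_sq z Hz). unfold radial_W in H.
  rewrite <- H. pose proof (sqrt_pos (1 + sinh_sq z * radial_sol z ^ 2)). unfold sinh_sq in *.
  assert (0 <= z * (z + 2) * radial_sol z ^ 2) by (apply Rmult_le_pos; [nra | apply pow2_ge_0]).
  nra.
Qed.

Lemma is_derive_radial_G z : 0 <= z -> is_derive radial_G z (radial_dG z).
Proof.
  intros Hz. pose proof (radial_W_pos z Hz). pose proof (radial_W_sq z Hz). pose proof rho_pos.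
  assert (HP : ex_derive radial_sol z) by (apply (radial_sol_smooth 0); lra).
  unfold radial_G, radial_dG, radial_W, sinh_sq in *.
  set (W := sqrt (1 + z * (z + 2) * radial_sol z ^ 2)) in *.
  auto_derive.
  - replace (radial_sol z * (radial_sol z * 1)) with (radial_sol z ^ 2) by ring.
    fold W. repeat split; auto; nra.
  - replace (radial_sol z * (radial_sol z * 1)) with (radial_sol z ^ 2) by ring. fold W.
    change (Derive (fun x => radial_sol x) z) with (Derive radial_sol z). field. lra.
Qed.

Lemma radial_G_translator z : 0 <= z ->
  / 2 * (radial_dG z * sinh_sq z + radial_G z * (2 * (z + 1))) = / radial_W z.
Proof.
  intros Hz. unfold radial_dG, radial_G.
  apply translator_identity;
    [now apply radial_W_pos | now apply radial_W_sq | now apply radial_sol_ode].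
Qed.

Lemma graph_upwards_any u : graph_upwards u.
Proof.
  intros x y _. unfold graph_angle, Wg. apply Rinv_0_lt_compat, sqrt_lt_R0.
  assert (0 <= y ^ 2 * (partial_x u x y ^ 2 + partial_y u x y ^ 2)); [|lra].
  apply Rmult_le_pos; [|apply Rplus_le_le_0_compat]; apply pow2_ge_0.
Qed.

Notation dist_dx x y := (xy_eval xy_dist_dx x y).
Notation dist_dy x y := (xy_eval xy_dist_dy x y).

Lemma hyperbolic_grad_cosh_dist x y : 0 < y ->
  y ^ 2 * (dist_dx x y ^ 2 + dist_dy x y ^ 2) = sinh_sq (cosh_dist_m1 x y).
Proof. intros. unfold sinh_sq, cosh_dist_m1. simpl. field. lra. Qed.

Lemma hyperbolic_laplacian_cosh_dist x y : 0 < y ->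
  y ^ 2 * (/ y + (x * x + 1) * / y ^ 3) = 2 * (cosh_dist_m1 x y + 1).
Proof. intros. unfold cosh_dist_m1. field. lra. Qed.

Lemma partial_x_radial_graph x y : 0 < y ->
  partial_x radial_graph x y = radial_sol (cosh_dist_m1 x y) * dist_dx x y.
Proof.
  intros Hy.
  change (partial_x radial_graph x y) with (iter_partial (false :: nil) radial_graph x y).
  rewrite iter_partial_radial_graph by exact Hy. cbn [xy_partials xy_dx xy_dy xy_eval].
  rewrite (Derive_n_radial_primitive 0) by now apply cosh_dist_m1_gt. reflexivity.
Qed.

Lemma partial_y_radial_graph x y : 0 < y ->
  partial_y radial_graph x y = radial_sol (cosh_dist_m1 x y) * dist_dy x y.
Proof.
  intros Hy.
  change (partial_y radial_graph x y) with (iter_partial (true :: nil) radial_graph x y).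
  rewrite iter_partial_radial_graph by exact Hy. cbn [xy_partials xy_dx xy_dy xy_eval].
  rewrite (Derive_n_radial_primitive 0) by now apply cosh_dist_m1_gt. reflexivity.
Qed.

Lemma Wg_radial_graph x y : 0 < y -> Wg radial_graph x y = radial_W (cosh_dist_m1 x y).
Proof.
  intros Hy. unfold Wg, radial_W.
  rewrite partial_x_radial_graph, partial_y_radial_graph by exact Hy.
  rewrite <- hyperbolic_grad_cosh_dist by exact Hy. f_equal. ring.
Qed.

Lemma radial_graph_flux_x x y : 0 < y ->
  partial_x radial_graph x y / Wg radial_graph x y = radial_G (cosh_dist_m1 x y) * dist_dx x y.
Proof.
  intros Hy. rewrite partial_x_radial_graph, Wg_radial_graph by exact Hy. unfold radial_G.
  pose proof (radial_W_pos _ (cosh_dist_m1_nonneg x y Hy)). field. lra.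
Qed.

Lemma radial_graph_flux_y x y : 0 < y ->
  partial_y radial_graph x y / Wg radial_graph x y = radial_G (cosh_dist_m1 x y) * dist_dy x y.
Proof.
  intros Hy. rewrite partial_y_radial_graph, Wg_radial_graph by exact Hy. unfold radial_G.
  pose proof (radial_W_pos _ (cosh_dist_m1_nonneg x y Hy)). field. lra.
Qed.

Lemma partial_x_radial_graph_flux x y : 0 < y ->
  partial_x (fun a b => partial_x radial_graph a b / Wg radial_graph a b) x y
  = radial_dG (cosh_dist_m1 x y) * dist_dx x y * dist_dx x y + radial_G (cosh_dist_m1 x y) * / y.
Proof.
  intros Hy. unfold partial_x at 1.
  rewrite (Derive_ext _ (fun t => radial_G (cosh_dist_m1 t y) * dist_dx t y))
    by (intros; now apply radial_graph_flux_x).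
  apply is_derive_unique.
  apply (is_derive_mult (fun t => radial_G (cosh_dist_m1 t y)) (fun t => dist_dx t y));
    [| simpl; auto_derive; [exact I | ring] | intros; apply Rmult_comm].
  rewrite Rmult_comm. apply (is_derive_comp radial_G (fun t => cosh_dist_m1 t y)).
  - apply is_derive_radial_G, cosh_dist_m1_nonneg, Hy.
  - now apply is_derive_cosh_dist_m1_x.
Qed.

Lemma partial_y_radial_graph_flux x y : 0 < y ->
  partial_y (fun a b => partial_y radial_graph a b / Wg radial_graph a b) x y
  = radial_dG (cosh_dist_m1 x y) * dist_dy x y * dist_dy x y
    + radial_G (cosh_dist_m1 x y) * ((x * x + 1) * / y ^ 3).
Proof.
  intros Hy. unfold partial_y at 1.
  rewrite (Derive_ext_loc _ (fun t => radial_G (cosh_dist_m1 x t) * dist_dy x t)).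
  2: { apply (filter_imp (fun t => 0 < t)); [|now apply open_gt].
       intros. now apply radial_graph_flux_y. }
  apply is_derive_unique.
  apply (is_derive_mult (fun t => radial_G (cosh_dist_m1 x t)) (fun t => dist_dy x t));
    [| simpl; auto_derive; [lra | field; lra] | intros; apply Rmult_comm].
  rewrite Rmult_comm. apply (is_derive_comp radial_G (fun t => cosh_dist_m1 x t)).
  - apply is_derive_radial_G, cosh_dist_m1_nonneg, Hy.
  - now apply is_derive_cosh_dist_m1_y.
Qed.

Lemma radial_graph_translator : graph_is_translator radial_graph.
Proof.
  intros x y Hy. unfold in_H2 in Hy. unfold graph_mean_curvature, graph_angle.
  rewrite partial_x_radial_graph_flux, partial_y_radial_graph_flux, Wg_radial_graph by exact Hy.
  pose proof (hyperbolic_grad_cosh_dist x y Hy) as Hgrad.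
  pose proof (hyperbolic_laplacian_cosh_dist x y Hy) as Hlap.
  set (q := cosh_dist_m1 x y) in *.
  rewrite <- (radial_G_translator q) by now apply cosh_dist_m1_nonneg.
  rewrite <- Hgrad, <- Hlap. f_equal. ring.
Qed.

Theorem theorem3p3 :
  exists u : R -> R -> R,
    smooth_on_H2 u /\
    graph_upwards u /\
    graph_is_translator u /\
    exists ox oy : R, in_H2 ox oy /\ rotationally_symmetric_about u ox oy.
Proof.
  exists radial_graph.
  split; [exact radial_graph_smooth|].
  split; [apply graph_upwards_any|].
  split; [exact radial_graph_translator|].
  exists 0, 1. split; [unfold in_H2; lra | exact radial_graph_rotation].
Qed.
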